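(* $$ \begin{aligned} &\mathcal C_2\left(\tfrac16\right)=3^{\frac1{12}}\exp\left(\frac{\sqrt3}{4\pi}\left(\frac14L(2,\chi_3)-L(2,\chi_6)\right)\right), \\ &\mathcal C_3\left(\tfrac16\right)=3^{\frac1{72}}\exp\left(\frac{11}{72\pi^2}\zeta(3)+\frac{\sqrt3}{12\pi}\left(\frac14L(2,\chi_3)-L(2,\chi_6)\right)\right). \end{aligned} $$ Consequently $\zeta(3)=\frac{72\pi^2}{11}\log\left(\frac{3^{1/72}\,\mathcal C_3(1/6)}{\mathcal C_2(1/6)^{1/3}}\right)$.
   Context: For an integer $r\ge2$ let $P_r(y)=(1-y)\exp\left(y+\frac{y^2}{2}+\cdots+\frac{y^r}{r}\right)$. For real $|x|<\tfrac12$, the Kurokawa–Koyama multiple cosine function of order $r$ is the convergent positive product $\mathcal C_r(x)=\prod_{n\ge1,\ n\text{ odd}}\left\{P_r\left(\frac{x}{n/2}\right)P_r\left(-\frac{x}{n/2}\right)^{(-1)^{r-1}}\right\}^{(n/2)^{r-1}}$. $\chi_3$ is the nontrivial Dirichlet character modulo 3 ($\chi_3(n)=1$ if $n\equiv1$, $-1$ if $n\equiv2$, $0$ if $3\mid n$) and $\chi_6$ is the nontrivial real primitive character modulo 6 ($\chi_6(n)=1$ if $n\equiv1\pmod 6$, $-1$ if $n\equiv5\pmod6$, $0$ otherwise); $L(s,\chi)=\sum_{n\ge1}\chi(n)n^{-s}$. *)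

From Stdlib Require Import Reals Lra Lia.
From Coquelicot Require Import Coquelicot.
Open Scope R_scope.

Definition Pr (r : nat) (y : R) : R :=
  (1 - y) * exp (sum_f_R0 (fun k => y ^ (k + 1) / INR (k + 1)) (r - 1)).

Definition mc_factor (r : nat) (x : R) (k : nat) : R :=
  let h := INR (2 * k + 1) / 2 in
  Rpower (Pr r (x / h) * Rpower (Pr r (- x / h)) ((-1) ^ (r - 1))) (h ^ (r - 1)).

Fixpoint mc_partial (r : nat) (x : R) (N : nat) : R :=
  match N with
  | O => 1
  | S N' => mc_partial r x N' * mc_factor r x N'
  end.

Definition mcos (r : nat) (x : R) : R := real (Lim_seq (mc_partial r x)).

Definition chi3 (n : nat) : R :=
  match (n mod 3)%nat with 1%nat => 1 | 2%nat => -1 | _ => 0 end.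
Definition chi6 (n : nat) : R :=
  match (n mod 6)%nat with 1%nat => 1 | 5%nat => -1 | _ => 0 end.

Definition Lfun (chi : nat -> R) (s : nat) : R :=
  Series (fun n => chi (S n) / INR (S n) ^ s).

Definition zeta3 : R := Series (fun n => 1 / INR (S n) ^ 3).

(* Write C_r(x) = exp f_r(x) with f_r the sum of the logarithms of the factors. Each of
   these has derivative -x^(r-1) times a term of the partial fraction expansion of
   PI tan (PI x) (obtained from that of PI^2/sin^2 (PI x), proved by Herglotz's trick), so
   f_r'(x) = -x^(r-1) PI tan (PI x).  For r < 1, PI tan (PI x) is approximated up to
   O((1-r)^2) by the x-derivative of -ln |1 + r e^(2 i PI x)|, whose Fourier series can be
   integrated termwise; at x = 1/6 the values of sin and cos at multiples of PI/3 turn the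
   resulting series into L(2, chi_3) and zeta(3), and Abel's theorem lets r -> 1.  Finally
   L(2, chi_6) = 5/4 L(2, chi_3), and the last identity combines the first two. *)

From Stdlib Require Import Reals Lra Lia Arith Ranalysis5.
From Coquelicot Require Import Coquelicot.
Open Scope R_scope.

(** * Series of functions *)

Lemma Series_0 : Series (fun _ => 0) = 0.
Proof.
  rewrite (Series_ext _ (fun n => 0 * 0)) by (intros; ring).
  rewrite Series_scal_l. ring.
Qed.

Lemma Un_cv_partial_Series (a : nat -> R) : ex_series a -> Un_cv (sum_f_R0 a) (Series a).
Proof.
  intros Ha. apply is_series_Reals, Series_correct, Ha.
Qed.

Lemma ex_series_inv_succ_sq : ex_series (fun n => / (INR n + 1) ^ 2).
Proof.
  (* telescoping majorant 2 (1/(n+1) - 1/(n+2)) *)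
  apply (ex_series_le (fun n => / (INR n + 1) ^ 2) (fun n => 2 * (/ (INR n + 1) - / (INR n + 2)))).
  - intros n. pose proof (pos_INR n). change norm with Rabs; simpl.
    rewrite Rabs_pos_eq by (apply Rlt_le, Rinv_0_lt_compat; nra).
    replace (2 * (/ (INR n + 1) - / (INR n + 2))) with (/ ((INR n + 1) * (INR n + 2) / 2))
      by (field; lra).
    apply Rinv_le_contravar; nra.
  - apply (ex_series_scal_l 2 (fun n => / (INR n + 1) - / (INR n + 2))). exists 1.
    apply is_series_Reals. intros eps Heps.
    destruct (INR_unbounded (/ eps)) as [N HN].
    exists N. intros n Hn. unfold Rdist.
    assert (Hs : forall m, sum_f_R0 (fun n => / (INR n + 1) - / (INR n + 2)) m = 1 - / (INR m + 2)).
    { induction m; [simpl; field|].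
      rewrite tech5, IHm, S_INR. field. pose proof (pos_INR m); lra. }
    rewrite Hs. pose proof (pos_INR n).
    assert (INR N <= INR n) by (apply le_INR; lia).
    replace (1 - / (INR n + 2) - 1) with (- / (INR n + 2)) by ring.
    rewrite Rabs_Ropp, Rabs_pos_eq by (apply Rlt_le, Rinv_0_lt_compat; lra).
    rewrite <- (Rinv_inv eps).
    apply Rinv_lt_contravar; [apply Rmult_lt_0_compat|]; try apply Rinv_0_lt_compat; lra.
Qed.

Lemma ex_series_le_inv_succ_sq (a : nat -> R) C :
  (forall n, Rabs (a n) <= C * / (INR n + 1) ^ 2) -> ex_series a.
Proof.
  intros H. apply (ex_series_le a _ H).
  apply (ex_series_scal_l C (fun n => / (INR n + 1) ^ 2)), ex_series_inv_succ_sq.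
Qed.

Lemma Rabs_Series_sub_partial_le (a b : nat -> R) (n : nat) :
  (forall k, Rabs (a k) <= b k) -> ex_series b ->
  Rabs (Series a - sum_f_R0 a n) <= Series b - sum_f_R0 b n.
Proof.
  intros H Hb.
  assert (Ha : ex_series a) by (apply (ex_series_le a b); auto).
  rewrite (Series_incr_n a (S n)), (Series_incr_n b (S n)) by (auto; lia).
  simpl Init.Nat.pred.
  replace (sum_f_R0 a n + Series (fun k => a (S n + k)%nat) - sum_f_R0 a n)
    with (Series (fun k => a (S n + k)%nat)) by ring.
  replace (sum_f_R0 b n + Series (fun k => b (S n + k)%nat) - sum_f_R0 b n)
    with (Series (fun k => b (S n + k)%nat)) by ring.
  assert (Hbt : ex_series (fun k => b (S n + k)%nat)) by (apply ex_series_incr_n; auto).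
  eapply Rle_trans; [apply Series_Rabs|].
  - apply (ex_series_le (fun k => Rabs (a (S n + k)%nat)) (fun k => b (S n + k)%nat)); [|exact Hbt].
    intros k. change norm with Rabs. simpl. rewrite Rabs_Rabsolu. apply H.
  - apply Series_le; auto. intros k; split; [apply Rabs_pos | apply H].
Qed.

Section WeierstrassMTest.

Variables (f : nat -> R -> R) (M : nat -> R) (c : R) (rho : posreal).
Hypothesis f_le_M : forall n y, Boule c rho y -> Rabs (f n y) <= M n.
Hypothesis ex_series_M : ex_series M.

Lemma CVU_partial_Series :
  CVU (fun N y => sum_f_R0 (fun n => f n y) N) (fun y => Series (fun n => f n y)) c rho.
Proof.
  intros eps Heps.
  destruct (Un_cv_partial_Series M ex_series_M eps Heps) as [N HN].
  exists N. intros n y Hn Hy.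
  eapply Rle_lt_trans; [apply (Rabs_Series_sub_partial_le _ M); auto|].
  specialize (HN n Hn). unfold Rdist in HN. rewrite Rabs_minus_sym in HN.
  eapply Rle_lt_trans; [apply Rle_abs | exact HN].
Qed.

Lemma continuity_pt_Series x :
  Boule c rho x -> (forall n y, Boule c rho y -> continuity_pt (f n) y) ->
  continuity_pt (fun y => Series (fun n => f n y)) x.
Proof.
  intros Hx Hc.
  apply (CVU_continuity _ _ c rho CVU_partial_Series); auto.
  intros N y Hy. induction N as [|N IH]; simpl; [apply Hc; auto|].
  apply (continuity_pt_plus (fun y => sum_f_R0 (fun n => f n y) N) (f (S N))); auto.
Qed.

End WeierstrassMTest.

Lemma derivable_pt_lim_Series (f f' : nat -> R -> R) (M : nat -> R) c (rho : posreal) x :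
  Boule c rho x ->
  (forall n y, Boule c rho y -> derivable_pt_lim (f n) y (f' n y)) ->
  (forall n y, Boule c rho y -> continuity_pt (f' n) y) ->
  (forall n y, Boule c rho y -> Rabs (f' n y) <= M n) -> ex_series M ->
  (forall y, Boule c rho y -> ex_series (fun n => f n y)) ->
  derivable_pt_lim (fun y => Series (fun n => f n y)) x (Series (fun n => f' n x)).
Proof.
  intros Hx Hd Hc HM Hs He.
  apply (derivable_pt_lim_CVU (fun N y => sum_f_R0 (fun n => f n y) N)
          (fun N y => sum_f_R0 (fun n => f' n y) N) _
          (fun y => Series (fun n => f' n y)) x c rho Hx).
  - intros y N Hy. induction N as [|N IH]; simpl; [apply Hd; auto|].
    apply (derivable_pt_lim_plus (fun y => sum_f_R0 (fun n => f n y) N) (f (S N))); auto.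
  - intros y Hy. apply Un_cv_partial_Series; auto.
  - apply (CVU_partial_Series _ M); auto.
  - intros y Hy. apply (continuity_pt_Series _ M c rho); auto.
Qed.

Lemma Rabs_sub_le_MVT (f f' : R -> R) (a b K : R) :
  (forall c, Rmin a b <= c <= Rmax a b -> derivable_pt_lim f c (f' c)) ->
  (forall c, Rmin a b <= c <= Rmax a b -> Rabs (f' c) <= K) ->
  Rabs (f b - f a) <= K * Rabs (b - a).
Proof.
  intros Hd HK. destruct (MVT_abs f f' a b Hd) as [c [-> Hc]].
  apply Rmult_le_compat_r; [apply Rabs_pos | apply HK, Hc].
Qed.

Lemma eq_of_derivable_pt_lim_0 (f : R -> R) a b :
  a <= b -> (forall c, a <= c <= b -> derivable_pt_lim f c 0) -> f b = f a.
Proof.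
  intros Hab Hd.
  assert (H := Rabs_sub_le_MVT f (fun _ => 0) a b 0).
  rewrite Rmin_left, Rmax_right, Rmult_0_l in H by exact Hab.
  apply Rabs_le_between in H; [lra | exact Hd | intros; rewrite Rabs_R0; lra].
Qed.

Lemma Series_of_partial_subseq (a Q : nat -> R) (phi : nat -> nat) :
  (forall N, sum_f_R0 Q N = sum_f_R0 a (phi N)) -> (forall N, (N <= phi N)%nat) ->
  ex_series a -> ex_series Q /\ Series Q = Series a.
Proof.
  intros HQ Hphi Ha.
  assert (H : is_series Q (Series a)).
  { apply is_series_Reals. intros eps He.
    destruct (Un_cv_partial_Series a Ha eps He) as [N HN].
    exists N. intros n Hn. rewrite HQ. apply HN. specialize (Hphi n). lia. }
  split; [exists (Series a); auto | apply is_series_unique; auto].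
Qed.

Lemma Series_group2 (a : nat -> R) : ex_series a ->
  ex_series (fun n => a (2*n)%nat + a (2*n+1)%nat) /\
  Series (fun n => a (2*n)%nat + a (2*n+1)%nat) = Series a.
Proof.
  apply (Series_of_partial_subseq a _ (fun N => 2*N+1)%nat); [|intros; lia].
  induction N as [|N IH]; [simpl; ring|].
  rewrite tech5, IH. replace (2 * S N + 1)%nat with (S (S (2*N+1))) by lia.
  rewrite tech5, tech5. replace (2 * S N)%nat with (S (2*N+1)) by lia. ring.
Qed.

Lemma Series_group3 (a : nat -> R) : ex_series a ->
  Series (fun n => a (3*n)%nat + a (3*n+1)%nat + a (3*n+2)%nat) = Series a.
Proof.
  intros Ha. apply (Series_of_partial_subseq a _ (fun N => 3*N+2)%nat); auto; [|intros; lia].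
  induction N as [|N IH]; [simpl; ring|].
  rewrite tech5, IH. replace (3 * S N + 2)%nat with (S (S (S (3*N+2)))) by lia.
  rewrite tech5, tech5, tech5.
  replace (3 * S N + 1)%nat with (S (S (3*N+2))) by lia.
  replace (3 * S N)%nat with (S (3*N+2)) by lia. ring.
Qed.

Lemma derivable_pt_lim_continuity_pt f x l : derivable_pt_lim f x l -> continuity_pt f x.
Proof. intros H. apply derivable_continuous_pt. exists l. exact H. Qed.

Lemma ex_derive_continuity_pt (f : R -> R) x : ex_derive f x -> continuity_pt f x.
Proof.
  intros H. apply continuity_pt_filterlim, (@ex_derive_continuous R_AbsRing R_NormedModule), H.
Qed.

(** * Partial fractions of PI^2 / sin^2 and of PI tan *)

Lemma sin_ge_cubic (u : R) : 0 <= u <= PI -> u - u^3/6 <= sin u.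
Proof.
  intros Hu. destruct (SIN u) as [H _]; try lra.
  replace (sin_lb u) with (u - u^3/6 + u^5/120 - u^7/5040) in H
    by (unfold sin_lb, sin_approx, sin_term; simpl; field).
  pose proof PI_4.
  assert (0 <= u^5/120 - u^7/5040).
  { assert (u^7 = u^5 * u^2) by ring. assert (0 <= u^5) by (apply pow_le; lra).
    assert (u^2 <= 16) by nra. nra. }
  lra.
Qed.

Lemma inv_sin_sq_sub_inv_sq_bound (u : R) : 0 < u <= PI/2 -> 0 <= / (sin u)^2 - / u^2 <= 3.
Proof.
  intros Hu. pose proof PI_4. pose proof PI_RGT_0.
  assert (Hl := sin_ge_cubic u ltac:(lra)).
  assert (Hup : sin u <= u) by (left; apply sin_lt_x; lra).
  set (s := sin u) in *. set (t := 1 - u*u/6).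
  assert (Hs : u * t <= s) by (unfold t; simpl in Hl; lra).
  assert (Ht : 1/3 <= t <= 1) by (unfold t; nra).
  assert (Hs0 : 0 < s) by nra.
  replace (/ s^2 - / u^2) with ((u*u - s*s) / (u*u * (s*s))) by (field; lra).
  assert (Hden : 0 < u*u * (s*s)) by (apply Rmult_lt_0_compat; nra).
  split.
  - apply Rmult_le_pos; [nra | apply Rlt_le, Rinv_0_lt_compat, Hden].
  - apply (Rmult_le_reg_r (u*u * (s*s))); auto.
    unfold Rdiv. rewrite Rmult_assoc, Rinv_l, Rmult_1_r by lra.
    (* u^2 - s^2 <= u^2 (1 - t^2) <= u^4/3 and u^2 s^2 >= u^4/9 *)
    assert (Hut : 0 <= u*t) by nra.
    assert (Hsq : (u*t)*(u*t) <= s*s) by nra.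
    assert (H1 : u*u - s*s <= u*u*((1-t)*(1+t))) by nra.
    assert (H2 : u*u*((1-t)*(1+t)) <= u*u*(u*u)/3).
    { replace (1 - t) with (u*u/6) by (unfold t; ring).
      assert (0 <= u*u*(u*u/6)) by nra. nra. }
    assert (H3 : u*u*(u*u)/9 <= u*u*(s*s)).
    { assert (t*t >= 1/9) by nra. assert (0 <= u*u*(u*u)) by nra. nra. }
    nra.
Qed.

Definition cosec_sq_term (x : R) (n : nat) : R := / (x + INR n)^2 + / (x - INR n - 1)^2.

(* Sum over all integers m of 1/(x+m)^2, pairing m = n with m = -n-1. *)
Definition cosec_sq_series (x : R) : R := Series (cosec_sq_term x).

Definition cosec_sq_defect (x : R) : R := PI^2 / (sin (PI*x))^2 - cosec_sq_series x.

Lemma cosec_sq_term_S_bound x n :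
  0 < x < 1 -> 0 <= cosec_sq_term x (S n) <= 2 * / (INR n + 1)^2.
Proof.
  intros Hx. unfold cosec_sq_term. rewrite S_INR. pose proof (pos_INR n).
  replace ((x - (INR n + 1) - 1)^2) with ((INR n + 2 - x)^2) by ring.
  assert (/ (x + (INR n + 1))^2 <= / (INR n + 1)^2)
    by (apply Rinv_le_contravar; [nra | apply pow_incr; lra]).
  assert (/ (INR n + 2 - x)^2 <= / (INR n + 1)^2)
    by (apply Rinv_le_contravar; [nra | apply pow_incr; lra]).
  assert (0 < / (x + (INR n + 1))^2) by (apply Rinv_0_lt_compat; nra).
  assert (0 < / (INR n + 2 - x)^2) by (apply Rinv_0_lt_compat; nra).
  lra.
Qed.

Lemma ex_series_cosec_sq_term x : 0 < x < 1 -> ex_series (cosec_sq_term x).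
Proof.
  intros Hx. apply ex_series_incr_1, (ex_series_le_inv_succ_sq _ 2).
  intros n. destruct (cosec_sq_term_S_bound x n Hx). rewrite Rabs_pos_eq; lra.
Qed.

Lemma cosec_sq_defect_bound x :
  0 < x < 1 -> Rabs (cosec_sq_defect x) <= 3 * PI^2 + 4 + 2 * Series (fun n => / (INR n + 1)^2).
Proof.
  intros Hx. pose proof PI_RGT_0.
  set (S2 := Series (fun n => / (INR n + 1)^2)).
  assert (Htail : 0 <= Series (fun n => cosec_sq_term x (S n)) <= 2 * S2).
  { split.
    - rewrite <- Series_0. apply Series_le; [intros n; split; [lra | apply cosec_sq_term_S_bound; auto]|].
      apply (proj1 (ex_series_incr_1 (cosec_sq_term x))), ex_series_cosec_sq_term; auto.
    - unfold S2. rewrite <- Series_scal_l. apply Series_le; [intros; apply cosec_sq_term_S_bound; auto|].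
      apply (ex_series_scal_l 2 (fun n => / (INR n + 1)^2)), ex_series_inv_succ_sq. }
  assert (HS2 : 0 <= S2).
  { unfold S2. rewrite <- Series_0. apply Series_le; [|apply ex_series_inv_succ_sq].
    intros n; split; [lra|]. apply Rlt_le, Rinv_0_lt_compat, pow_lt. pose proof (pos_INR n); lra. }
  (* near 0 the defect is 1/x^2 away from a bounded function, near 1 it is 1/(1-x)^2 *)
  assert (Hnear0 : forall y, 0 < y <= 1/2 -> 0 <= PI^2 / (sin (PI*y))^2 - / y^2 <= 3 * PI^2).
  { intros y Hy.
    destruct (inv_sin_sq_sub_inv_sq_bound (PI*y) ltac:(split; nra)).
    assert (0 < sin (PI*y)) by (apply sin_gt_0; nra).
    replace (PI^2 / (sin (PI*y))^2 - / y^2) with (PI^2 * (/ (sin (PI*y))^2 - / (PI*y)^2))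
      by (field; repeat split; lra).
    split; nra. }
  assert (Hinv : forall y, 1/2 <= y < 1 -> 0 < / y^2 <= 4).
  { intros y Hy. split; [apply Rinv_0_lt_compat; nra|].
    replace 4 with (/ (1/4)) by field. apply Rinv_le_contravar; nra. }
  unfold cosec_sq_defect, cosec_sq_series.
  rewrite Series_incr_1 by (apply ex_series_cosec_sq_term; auto).
  unfold cosec_sq_term at 1. simpl INR. rewrite Rplus_0_r, !Rminus_0_r.
  replace ((x - 1)^2) with ((1 - x)^2) by ring.
  destruct (Rle_or_lt x (1/2)) as [Hh|Hh].
  - pose proof (Hnear0 x ltac:(lra)). pose proof (Hinv (1 - x) ltac:(lra)).
    apply Rabs_le. fold S2. lra.
  - pose proof (Hnear0 (1 - x) ltac:(lra)). pose proof (Hinv x ltac:(lra)).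
    replace (PI * (1 - x)) with (PI - PI * x) in * by ring. rewrite sin_PI_x in *.
    apply Rabs_le. fold S2. lra.
Qed.

Lemma inv_sin_sq_duplication x : 0 < x < 1 ->
  PI^2 / (sin (PI*(x/2)))^2 + PI^2 / (sin (PI*((x+1)/2)))^2 = 4 * (PI^2 / (sin (PI*x))^2).
Proof.
  intros Hx. pose proof PI_RGT_0.
  replace (PI*((x+1)/2)) with (PI*(x/2) + PI/2) by field.
  replace (PI*x) with (2*(PI*(x/2))) by field.
  rewrite sin_plus, cos_PI2, sin_PI2, sin_2a.
  assert (0 < sin (PI*(x/2))) by (apply sin_gt_0; nra).
  assert (0 < cos (PI*(x/2))) by (apply cos_gt_0; nra).
  pose proof (sin2_cos2 (PI*(x/2))) as Hpyth. unfold Rsqr in Hpyth.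
  set (s := sin (PI * (x / 2))) in *. set (c := cos (PI * (x / 2))) in *.
  transitivity (PI^2 * (s*s + c*c) / (s^2*c^2)); [field; lra|].
  rewrite Hpyth. field. lra.
Qed.

Lemma cosec_sq_series_duplication x : 0 < x < 1 ->
  cosec_sq_series (x/2) + cosec_sq_series ((x+1)/2) = 4 * cosec_sq_series x.
Proof.
  intros Hx. unfold cosec_sq_series.
  rewrite <- Series_plus by (apply ex_series_cosec_sq_term; lra).
  destruct (Series_group2 _ (ex_series_cosec_sq_term x Hx)) as [_ <-].
  rewrite <- Series_scal_l. apply Series_ext. intros n.
  unfold cosec_sq_term. rewrite !plus_INR, !mult_INR. simpl INR.
  pose proof (pos_INR n). field. repeat split; lra.
Qed.

(* Herglotz's trick: the defect is bounded and satisfies D(x/2) + D((x+1)/2) = 4 D(x),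
   so sup |D| <= sup |D| / 2. *)
Lemma cosec_sq_defect_eq0 x : 0 < x < 1 -> cosec_sq_defect x = 0.
Proof.
  set (B := 3 * PI^2 + 4 + 2 * Series (fun n => / (INR n + 1)^2)).
  assert (H : forall n x, 0 < x < 1 -> Rabs (cosec_sq_defect x) <= B / 2^n).
  { induction n as [|n IHn]; intros y Hy.
    - simpl. rewrite Rdiv_1_r. apply cosec_sq_defect_bound; auto.
    - assert (Hdup : cosec_sq_defect (y/2) + cosec_sq_defect ((y+1)/2) = 4 * cosec_sq_defect y).
      { unfold cosec_sq_defect.
        pose proof (inv_sin_sq_duplication y Hy). pose proof (cosec_sq_series_duplication y Hy). lra. }
      pose proof (IHn (y/2) ltac:(lra)). pose proof (IHn ((y+1)/2) ltac:(lra)).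
      assert (4 * Rabs (cosec_sq_defect y) <= 2 * (B / 2^n)).
      { rewrite <- (Rabs_pos_eq 4), <- Rabs_mult, <- Hdup by lra.
        eapply Rle_trans; [apply Rabs_triang | lra]. }
      replace (B / 2 ^ S n) with ((B / 2^n) / 2) by (simpl; field; apply pow_nonzero; lra).
      lra. }
  intros Hx. destruct (Req_dec (cosec_sq_defect x) 0) as [E|E]; auto. exfalso.
  assert (Hp : 0 < Rabs (cosec_sq_defect x)) by (apply Rabs_pos_lt; auto).
  destruct (INR_unbounded (B / Rabs (cosec_sq_defect x))) as [n Hn].
  assert (Hpow : INR n <= 2^n).
  { clear. induction n as [|n IH]; [simpl; lra|]. rewrite S_INR. simpl.
    assert (1 <= 2^n) by (apply pow_R1_Rle; lra). lra. }
  specialize (H n x Hx).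
  assert (0 < 2^n) by (apply pow_lt; lra).
  apply (Rmult_le_compat_r (2^n)) in H; [|lra].
  unfold Rdiv in *. rewrite Rmult_assoc, Rinv_l, Rmult_1_r in H by lra.
  apply (Rmult_lt_compat_r (Rabs (cosec_sq_defect x))) in Hn; auto.
  rewrite Rmult_assoc, Rinv_l, Rmult_1_r in Hn by lra.
  nra.
Qed.

Definition half_odd (n : nat) : R := INR n + / 2.

Lemma half_odd_eq k : INR (2 * k + 1) / 2 = half_odd k.
Proof. unfold half_odd. rewrite plus_INR, mult_INR. simpl. field. Qed.

Lemma sec_sq_partial_fractions y : -1/2 < y < 1/2 ->
  Series (fun n => / (half_odd n + y)^2 + / (half_odd n - y)^2) = PI^2 / (cos (PI*y))^2.
Proof.
  intros Hy. pose proof (cosec_sq_defect_eq0 (y + /2) ltac:(lra)) as H.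
  unfold cosec_sq_defect, cosec_sq_series in H.
  replace (PI * (y + /2)) with (PI*y + PI/2) in H by field.
  rewrite sin_plus, cos_PI2, sin_PI2, Rmult_0_r, Rmult_1_r, Rplus_0_l in H.
  rewrite (Series_ext _ (cosec_sq_term (y + /2))); [lra|].
  intros n. unfold cosec_sq_term, half_odd.
  replace ((y + / 2 - INR n - 1)^2) with ((INR n + / 2 - y)^2) by field.
  replace ((y + / 2 + INR n)^2) with ((INR n + / 2 + y)^2) by field.
  reflexivity.
Qed.

Definition quarter_ball : posreal := mkposreal (1/4) ltac:(lra).

Lemma Rabs_lt_of_Boule_quarter_ball y : Boule 0 quarter_ball y -> Rabs y < 1/4.
Proof. unfold Boule. simpl. rewrite Rminus_0_r. tauto. Qed.

Definition tan_pf_term (n : nat) (y : R) : R := / (half_odd n - y) - / (half_odd n + y).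
Definition sec_sq_pf_term (n : nat) (y : R) : R := / (half_odd n - y)^2 + / (half_odd n + y)^2.

Lemma half_odd_pm_ge n y :
  Rabs y < 1/4 -> (INR n + 1)/4 <= half_odd n - y /\ (INR n + 1)/4 <= half_odd n + y.
Proof. intros Hy. unfold half_odd. pose proof (pos_INR n). apply Rabs_def2 in Hy. split; lra. Qed.

Lemma tan_pf_term_deriv n y :
  Rabs y < 1/4 -> derivable_pt_lim (tan_pf_term n) y (sec_sq_pf_term n y).
Proof.
  intros Hy. destruct (half_odd_pm_ge n y Hy). pose proof (pos_INR n).
  apply is_derive_Reals. unfold tan_pf_term, sec_sq_pf_term. auto_derive.
  - repeat split; intro; nra.
  - field. repeat split; intro; nra.
Qed.

Lemma sec_sq_pf_term_continuity n y : Rabs y < 1/4 -> continuity_pt (sec_sq_pf_term n) y.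
Proof.
  intros Hy. destruct (half_odd_pm_ge n y Hy). pose proof (pos_INR n).
  apply ex_derive_continuity_pt. unfold sec_sq_pf_term. auto_derive.
  repeat split; intro; nra.
Qed.

Lemma sec_sq_pf_term_bound n y : Rabs y < 1/4 -> Rabs (sec_sq_pf_term n y) <= 32 * / (INR n + 1)^2.
Proof.
  intros Hy. destruct (half_odd_pm_ge n y Hy) as [Hm Hp]. pose proof (pos_INR n).
  assert (Hle : forall a, (INR n + 1)/4 <= a -> 0 < / a^2 <= 16 * / (INR n + 1)^2).
  { intros a Ha. split; [apply Rinv_0_lt_compat, pow_lt; lra|].
    replace (16 * / (INR n + 1)^2) with (/ ((INR n + 1)/4)^2) by (field; lra).
    apply Rinv_le_contravar; [apply pow_lt; lra | apply pow_incr; lra]. }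
  pose proof (Hle _ Hm). pose proof (Hle _ Hp).
  unfold sec_sq_pf_term. rewrite Rabs_pos_eq; lra.
Qed.

Lemma tan_pf_term_bound n y : Rabs y < 1/4 -> Rabs (tan_pf_term n y) <= 8 * / (INR n + 1)^2.
Proof.
  intros Hy. destruct (half_odd_pm_ge n y Hy). pose proof (pos_INR n).
  unfold tan_pf_term.
  replace (/ (half_odd n - y) - / (half_odd n + y))
    with (2 * y * / ((half_odd n - y) * (half_odd n + y))) by (field; lra).
  assert (Hprod : 0 < / ((half_odd n - y) * (half_odd n + y)) <= 16 * / (INR n + 1)^2).
  { split; [apply Rinv_0_lt_compat; nra|].
    replace (16 * / (INR n + 1)^2) with (/ (((INR n + 1)/4) * ((INR n + 1)/4))) by (field; lra).
    apply Rinv_le_contravar; [nra | apply Rmult_le_compat; lra]. }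
  rewrite !Rabs_mult, (Rabs_pos_eq 2), (Rabs_pos_eq (/ _)) by lra.
  assert (0 <= / (INR n + 1)^2) by (apply Rlt_le, Rinv_0_lt_compat, pow_lt; lra).
  pose proof (Rabs_pos y). nra.
Qed.

Lemma Series_tan_pf_term_deriv y : Rabs y < 1/4 ->
  derivable_pt_lim (fun y => Series (fun n => tan_pf_term n y)) y (PI^2 / (cos (PI*y))^2).
Proof.
  intros Hy.
  replace (PI^2 / (cos (PI*y))^2) with (Series (fun n => sec_sq_pf_term n y)).
  2:{ rewrite <- sec_sq_partial_fractions by (apply Rabs_def2 in Hy; lra).
      apply Series_ext. intros n; unfold sec_sq_pf_term. ring. }
  apply (derivable_pt_lim_Series _ _ (fun n => 32 * / (INR n + 1)^2) 0 quarter_ball).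
  - unfold Boule; simpl; rewrite Rminus_0_r; exact Hy.
  - intros n z Hz%Rabs_lt_of_Boule_quarter_ball. apply tan_pf_term_deriv, Hz.
  - intros n z Hz%Rabs_lt_of_Boule_quarter_ball. apply sec_sq_pf_term_continuity, Hz.
  - intros n z Hz%Rabs_lt_of_Boule_quarter_ball. apply sec_sq_pf_term_bound, Hz.
  - apply (ex_series_scal_l 32 (fun n => / (INR n + 1)^2)), ex_series_inv_succ_sq.
  - intros z Hz%Rabs_lt_of_Boule_quarter_ball. apply (ex_series_le_inv_succ_sq _ 8).
    intros n; apply tan_pf_term_bound, Hz.
Qed.

Lemma tan_partial_fractions y :
  0 <= y < 1/4 -> Series (fun n => tan_pf_term n y) = PI * tan (PI * y).
Proof.
  intros Hy. pose proof PI_RGT_0. pose proof PI_4.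
  set (D := fun z => Series (fun n => tan_pf_term n z) - PI * (sin (PI*z) / cos (PI*z))).
  assert (HD : D y = D 0).
  { apply eq_of_derivable_pt_lim_0; [lra|]. intros c Hc. unfold D.
    assert (Hcos : 0 < cos (PI*c)) by (apply cos_gt_0; nra).
    replace 0 with (PI^2 / (cos (PI*c))^2 - PI^2 / (cos (PI*c))^2) by ring.
    apply derivable_pt_lim_minus.
    - apply Series_tan_pf_term_deriv. rewrite Rabs_pos_eq; lra.
    - apply is_derive_Reals. auto_derive; [lra|].
      pose proof (sin2_cos2 (PI*c)) as Hpyth. unfold Rsqr in Hpyth.
      field_simplify; [|lra..].
      replace (cos (PI*c)^2) with (1 - sin (PI*c)^2) by (simpl; lra).
      field. replace (1 - sin (PI*c)^2) with (cos (PI*c)^2) by (simpl; lra).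
      apply pow_nonzero; lra. }
  assert (D0 : D 0 = 0).
  { unfold D, tan_pf_term. rewrite Rmult_0_r, sin_0, cos_0.
    rewrite (Series_ext _ (fun _ => 0)) by (intros; rewrite Rminus_0_r, Rplus_0_r; ring).
    rewrite Series_0. field. }
  unfold D, tan in *. lra.
Qed.

Section LogSeriesOfTanPrimitive.

(* The logarithms of the factors of C_2 and C_3 are such families, with p = 1, 2. *)
Variables (p : nat) (a : nat -> R -> R).
Hypothesis a_0 : forall k, a k 0 = 0.
Hypothesis a_deriv :
  forall k y, Rabs y < 1/4 -> derivable_pt_lim (a k) y (- y^p * tan_pf_term k y).

Lemma tan_pf_primitive_deriv_bound k y :
  Rabs y < 1/4 -> Rabs (- y^p * tan_pf_term k y) <= 8 * / (INR k + 1)^2.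
Proof.
  intros Hy. rewrite Rabs_mult, Rabs_Ropp, <- RPow_abs.
  assert (Rabs y ^ p <= 1) by (rewrite <- (pow1 p); apply pow_incr; split; [apply Rabs_pos | lra]).
  pose proof (pow_le _ p (Rabs_pos y)). pose proof (Rabs_pos (tan_pf_term k y)).
  pose proof (tan_pf_term_bound k y Hy). nra.
Qed.

Lemma ex_series_tan_pf_primitive z : Rabs z < 1/4 -> ex_series (fun k => a k z).
Proof.
  intros Hz. apply (ex_series_le_inv_succ_sq _ 2). intros k.
  assert (Hball : forall c, Rmin 0 z <= c <= Rmax 0 z -> Rabs c < 1/4).
  { intros c [H1 H2]. apply Rabs_def2 in Hz. apply Rabs_def1.
    - eapply Rle_lt_trans; [exact H2 | apply Rmax_lub_lt; lra].
    - eapply Rlt_le_trans; [|exact H1]. apply Rmin_glb_lt; lra. }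
  replace (a k z) with (a k z - a k 0) by (rewrite a_0; ring).
  eapply Rle_trans.
  - apply (Rabs_sub_le_MVT (a k) (fun y => - y^p * tan_pf_term k y) 0 z (8 * / (INR k + 1)^2));
      intros c Hc; [apply a_deriv | apply tan_pf_primitive_deriv_bound]; apply Hball, Hc.
  - rewrite Rminus_0_r.
    assert (0 <= / (INR k + 1)^2) by (apply Rlt_le, Rinv_0_lt_compat, pow_lt; pose proof (pos_INR k); lra).
    pose proof (Rabs_pos z). nra.
Qed.

Lemma Series_tan_pf_primitive_deriv x : 0 <= x < 1/4 ->
  derivable_pt_lim (fun y => Series (fun k => a k y)) x (- x^p * (PI * tan (PI * x))).
Proof.
  intros Hx. rewrite <- tan_partial_fractions, <- Series_scal_l by auto.
  apply (derivable_pt_lim_Series a (fun k y => - y^p * tan_pf_term k y)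
           (fun k => 8 * / (INR k + 1)^2) 0 quarter_ball).
  - unfold Boule; simpl. rewrite Rminus_0_r, Rabs_pos_eq; lra.
  - intros k y Hy%Rabs_lt_of_Boule_quarter_ball. apply a_deriv, Hy.
  - intros k y Hy%Rabs_lt_of_Boule_quarter_ball.
    apply (derivable_pt_lim_continuity_pt _ _
             (- (INR p * y^(pred p)) * tan_pf_term k y + - y^p * sec_sq_pf_term k y)).
    apply (derivable_pt_lim_mult (fun y => - y^p) (tan_pf_term k)).
    + apply (derivable_pt_lim_opp (fun y => y^p)), derivable_pt_lim_pow.
    + apply tan_pf_term_deriv, Hy.
  - intros k y Hy%Rabs_lt_of_Boule_quarter_ball. apply tan_pf_primitive_deriv_bound, Hy.
  - apply (ex_series_scal_l 8 (fun n => / (INR n + 1)^2)), ex_series_inv_succ_sq.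
  - intros y Hy%Rabs_lt_of_Boule_quarter_ball. apply ex_series_tan_pf_primitive, Hy.
Qed.

End LogSeriesOfTanPrimitive.

(** * The multiple cosines as exponentials *)

Lemma mcos_eq_exp_Series (r : nat) (a : nat -> R -> R) x :
  (forall k, mc_factor r x k = exp (a k x)) -> ex_series (fun k => a k x) ->
  mcos r x = exp (Series (fun k => a k x)).
Proof.
  intros Hf He. unfold mcos.
  assert (HP : forall N, mc_partial r x (S N) = exp (sum_f_R0 (fun k => a k x) N)).
  { induction N as [|N IH]; [simpl; rewrite Hf; ring|].
    change (mc_partial r x (S (S N))) with (mc_partial r x (S N) * mc_factor r x (S N)).
    rewrite IH, Hf, tech5, exp_plus. reflexivity. }
  rewrite <- Lim_seq_incr_1, (Lim_seq_ext _ _ HP).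
  rewrite (is_lim_seq_unique _ (exp (Series (fun k => a k x)))); [reflexivity|].
  apply (is_lim_seq_continuous exp); [apply derivable_continuous_pt, derivable_pt_exp|].
  apply is_lim_seq_Reals, Un_cv_partial_Series, He.
Qed.

Definition log_mc_factor2 (k : nat) (x : R) : R :=
  half_odd k * (ln (1 - x / half_odd k) - ln (1 + x / half_odd k)) + 2 * x.
Definition log_mc_factor3 (k : nat) (x : R) : R :=
  (half_odd k)^2 * (ln (1 - x / half_odd k) + ln (1 + x / half_odd k)) + x^2.

Lemma one_add_div_half_odd_pos k x : Rabs x < 1/2 -> 0 < 1 + x / half_odd k.
Proof.
  intros Hx. apply Rabs_def2 in Hx.
  assert (/ 2 <= half_odd k) by (unfold half_odd; pose proof (pos_INR k); lra).
  apply (Rmult_lt_reg_r (half_odd k)); [lra|]. field_simplify; lra.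
Qed.

Lemma one_sub_div_half_odd_pos k x : Rabs x < 1/2 -> 0 < 1 - x / half_odd k.
Proof.
  intros Hx. replace (1 - x / half_odd k) with (1 + - x / half_odd k) by (unfold Rdiv; ring).
  apply one_add_div_half_odd_pos. rewrite Rabs_Ropp. exact Hx.
Qed.

Lemma mc_factor2_eq x k : Rabs x < 1/2 -> mc_factor 2 x k = exp (log_mc_factor2 k x).
Proof.
  intros Hx. pose proof (one_sub_div_half_odd_pos k x Hx). pose proof (one_add_div_half_odd_pos k x Hx).
  assert (/ 2 <= half_odd k) by (unfold half_odd; pose proof (pos_INR k); lra).
  unfold mc_factor, Pr, Rpower. rewrite half_odd_eq. simpl.
  replace (1 - - x / half_odd k) with (1 + x / half_odd k) by (field; lra).
  rewrite ln_mult, ln_exp, !ln_mult, !ln_exp by (auto using exp_pos, Rmult_lt_0_compat).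
  unfold log_mc_factor2. f_equal. field. lra.
Qed.

Lemma mc_factor3_eq x k : Rabs x < 1/2 -> mc_factor 3 x k = exp (log_mc_factor3 k x).
Proof.
  intros Hx. pose proof (one_sub_div_half_odd_pos k x Hx). pose proof (one_add_div_half_odd_pos k x Hx).
  assert (/ 2 <= half_odd k) by (unfold half_odd; pose proof (pos_INR k); lra).
  unfold mc_factor, Pr, Rpower. rewrite half_odd_eq. simpl.
  replace (1 - - x / half_odd k) with (1 + x / half_odd k) by (field; lra).
  rewrite ln_mult, ln_exp, !ln_mult, !ln_exp by (auto using exp_pos, Rmult_lt_0_compat).
  unfold log_mc_factor3. f_equal. field. lra.
Qed.

Lemma log_mc_factor2_0 k : log_mc_factor2 k 0 = 0.
Proof. unfold log_mc_factor2, Rdiv. rewrite Rmult_0_l, Rminus_0_r, Rplus_0_r, ln_1. ring. Qed.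

Lemma log_mc_factor3_0 k : log_mc_factor3 k 0 = 0.
Proof. unfold log_mc_factor3, Rdiv. rewrite Rmult_0_l, Rminus_0_r, Rplus_0_r, ln_1. ring. Qed.

Lemma log_mc_factor2_deriv k x :
  Rabs x < 1/4 -> derivable_pt_lim (log_mc_factor2 k) x (- x^1 * tan_pf_term k x).
Proof.
  intros Hx. destruct (half_odd_pm_ge k x Hx). pose proof (pos_INR k).
  pose proof (one_sub_div_half_odd_pos k x ltac:(lra)). pose proof (one_add_div_half_odd_pos k x ltac:(lra)).
  apply is_derive_Reals. unfold log_mc_factor2, tan_pf_term. auto_derive.
  - repeat split; lra.
  - field. repeat split; intro; nra.
Qed.

Lemma log_mc_factor3_deriv k x :
  Rabs x < 1/4 -> derivable_pt_lim (log_mc_factor3 k) x (- x^2 * tan_pf_term k x).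
Proof.
  intros Hx. destruct (half_odd_pm_ge k x Hx). pose proof (pos_INR k).
  pose proof (one_sub_div_half_odd_pos k x ltac:(lra)). pose proof (one_add_div_half_odd_pos k x ltac:(lra)).
  apply is_derive_Reals. unfold log_mc_factor3, tan_pf_term. auto_derive.
  - repeat split; lra.
  - field. repeat split; intro; nra.
Qed.

Definition log_mcos2 (x : R) : R := Series (fun k => log_mc_factor2 k x).
Definition log_mcos3 (x : R) : R := Series (fun k => log_mc_factor3 k x).

Lemma mcos2_eq x : 0 <= x < 1/4 -> mcos 2 x = exp (log_mcos2 x).
Proof.
  intros Hx. assert (Hx' : Rabs x < 1/4) by (rewrite Rabs_pos_eq; lra).
  apply mcos_eq_exp_Series; [intros k; apply mc_factor2_eq; lra|].
  apply (ex_series_tan_pf_primitive 1); auto using log_mc_factor2_0, log_mc_factor2_deriv.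
Qed.

Lemma mcos3_eq x : 0 <= x < 1/4 -> mcos 3 x = exp (log_mcos3 x).
Proof.
  intros Hx. assert (Hx' : Rabs x < 1/4) by (rewrite Rabs_pos_eq; lra).
  apply mcos_eq_exp_Series; [intros k; apply mc_factor3_eq; lra|].
  apply (ex_series_tan_pf_primitive 2); auto using log_mc_factor3_0, log_mc_factor3_deriv.
Qed.

Lemma log_mcos2_deriv x :
  0 <= x < 1/4 -> derivable_pt_lim log_mcos2 x (- x^1 * (PI * tan (PI * x))).
Proof. apply Series_tan_pf_primitive_deriv; auto using log_mc_factor2_0, log_mc_factor2_deriv. Qed.

Lemma log_mcos3_deriv x :
  0 <= x < 1/4 -> derivable_pt_lim log_mcos3 x (- x^2 * (PI * tan (PI * x))).
Proof. apply Series_tan_pf_primitive_deriv; auto using log_mc_factor3_0, log_mc_factor3_deriv. Qed.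

Lemma log_mcos2_0 : log_mcos2 0 = 0.
Proof. unfold log_mcos2. rewrite (Series_ext _ (fun _ => 0)) by apply log_mc_factor2_0. apply Series_0. Qed.

Lemma log_mcos3_0 : log_mcos3 0 = 0.
Proof. unfold log_mcos3. rewrite (Series_ext _ (fun _ => 0)) by apply log_mc_factor3_0. apply Series_0. Qed.

(** * Fourier series of ln |1 + r e^(it)| *)

Lemma cos_succ_succ_mul k t :
  cos (INR (S (S k)) * t) = 2 * cos t * cos (INR (S k) * t) - cos (INR k * t).
Proof.
  rewrite !S_INR.
  replace ((INR k + 1 + 1) * t) with ((INR k + 1) * t + t) by ring.
  replace (INR k * t) with ((INR k + 1) * t - t) by ring.
  rewrite cos_plus, cos_minus. ring.
Qed.

Lemma quad_cos_pos s t : Rabs s < 1 -> 0 < 1 + 2 * s * cos t + s^2.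
Proof.
  intros Hs. pose proof (COS_bound t). apply Rabs_def2 in Hs.
  destruct (Rle_or_lt 0 s); nra.
Qed.

(* Real part of the geometric series sum_k q^k e^{i(k+1)t}; the three shifted series
   satisfy two shift relations and the Chebyshev recurrence. *)
Lemma Series_geom_cos q t : Rabs q < 1 ->
  Series (fun k => q^k * cos (INR (S k) * t)) = (cos t - q) / (1 - 2 * q * cos t + q^2).
Proof.
  intros Hq.
  assert (Hex : forall j, ex_series (fun k => q^k * cos (INR (k + j) * t))).
  { intros j. apply (ex_series_le (fun k => q^k * cos (INR (k + j) * t)) (fun k => Rabs q ^ k)).
    - intros k. change norm with Rabs. simpl. rewrite Rabs_mult, RPow_abs.
      pose proof (COS_bound (INR (k + j) * t)).
      assert (Rabs (cos (INR (k + j) * t)) <= 1) by (apply Rabs_le; lra).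
      pose proof (Rabs_pos (q^k)). nra.
    - apply ex_series_geom. rewrite Rabs_Rabsolu; auto. }
  assert (Hshift : forall j, ex_series (fun k => q^k * cos (INR (j + k) * t))).
  { intros j. apply (ex_series_ext (fun k => q^k * cos (INR (k + j) * t))); auto.
    intros k. rewrite Nat.add_comm. reflexivity. }
  set (Sg := Series (fun k => q^k * cos (INR (S k) * t))).
  set (Ug := Series (fun k => q^k * cos (INR (S (S k)) * t))).
  set (Vg := Series (fun k => q^k * cos (INR k * t))).
  assert (E1 : Vg = 1 + q * Sg).
  { unfold Vg. rewrite Series_incr_1 by apply (Hshift 0%nat).
    simpl (INR 0). rewrite Rmult_0_l, cos_0.
    unfold Sg. rewrite <- Series_scal_l.
    f_equal; [simpl; ring | apply Series_ext; intros; simpl; ring]. }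
  assert (E2 : Sg = cos t + q * Ug).
  { unfold Sg at 1. rewrite Series_incr_1 by apply (Hshift 1%nat).
    simpl (INR 1). rewrite Rmult_1_l.
    unfold Ug. rewrite <- Series_scal_l.
    f_equal; [f_equal; ring | apply Series_ext; intros; simpl; ring]. }
  assert (E3 : Ug = 2 * cos t * Sg - Vg).
  { unfold Ug, Sg, Vg. rewrite <- Series_scal_l, <- Series_minus.
    - apply Series_ext. intros k. rewrite cos_succ_succ_mul. ring.
    - apply (ex_series_scal_l (2 * cos t) (fun k => q^k * cos (INR (S k) * t))), (Hshift 1%nat).
    - apply (Hshift 0%nat). }
  assert (Hd : 0 < 1 - 2 * q * cos t + q^2).
  { replace (1 - 2 * q * cos t + q^2) with (1 + 2 * (- q) * cos t + (- q)^2) by ring.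
    apply quad_cos_pos. rewrite Rabs_Ropp. exact Hq. }
  assert (HH : Sg * (1 - 2 * q * cos t + q^2) = cos t - q) by (rewrite E3, E1 in E2; simpl; nra).
  rewrite <- HH. field. lra.
Qed.

(* The k-th term of the power series of ln |1 + s e^{it}| = Re ln (1 + s e^{it}). *)
Definition log_mod_term (t : R) (k : nat) (s : R) : R :=
  (-1)^k * cos (INR (S k) * t) / INR (S k) * s^(S k).

Lemma log_mod_term_deriv t k s :
  derivable_pt_lim (log_mod_term t k) s ((-1)^k * cos (INR (S k) * t) * s^k).
Proof.
  apply is_derive_Reals. unfold log_mod_term. auto_derive; auto.
  change (match k with 0%nat => 1 | S _ => INR k + 1 end) with (INR (S k)).
  assert (INR (S k) <> 0) by (apply not_0_INR; lia). field. auto.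
Qed.

Lemma sign_mul_cos_bound k t : Rabs ((-1)^k * cos (INR (S k) * t)) <= 1.
Proof.
  rewrite Rabs_mult, pow_1_abs, Rmult_1_l. pose proof (COS_bound (INR (S k) * t)).
  apply Rabs_le; lra.
Qed.

Lemma log_mod_term_bound t k s : Rabs (log_mod_term t k s) <= Rabs s ^ (S k).
Proof.
  unfold log_mod_term, Rdiv. rewrite Rabs_mult, (Rabs_mult _ (/ _)), <- RPow_abs.
  assert (HS : 1 <= INR (S k)) by (rewrite S_INR; pose proof (pos_INR k); lra).
  rewrite (Rabs_pos_eq (/ INR (S k))) by (apply Rlt_le, Rinv_0_lt_compat; lra).
  assert (/ INR (S k) <= 1) by (rewrite <- Rinv_1; apply Rinv_le_contravar; lra).
  assert (0 <= / INR (S k)) by (apply Rlt_le, Rinv_0_lt_compat; lra).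
  pose proof (sign_mul_cos_bound k t). pose proof (Rabs_pos ((-1) ^ k * cos (INR (S k) * t))).
  pose proof (pow_le _ (S k) (Rabs_pos s)).
  assert (Rabs ((-1) ^ k * cos (INR (S k) * t)) * / INR (S k) <= 1) by nra.
  nra.
Qed.

Lemma Series_log_mod_term_deriv t c : Rabs c < 1 ->
  derivable_pt_lim (fun s => Series (fun k => log_mod_term t k s)) c
    ((cos t + c) / (1 + 2 * c * cos t + c^2)).
Proof.
  intros Hc.
  set (rho := mkposreal ((1 + Rabs c)/2) ltac:(pose proof (Rabs_pos c); lra)).
  assert (Hb : forall s, Boule 0 rho s -> Rabs s < (1 + Rabs c)/2).
  { intros s Hs. unfold Boule in Hs; simpl in Hs. rewrite Rminus_0_r in Hs. auto. }
  assert (Hpow : forall s n, Boule 0 rho s -> Rabs s ^ n <= ((1 + Rabs c)/2)^n).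
  { intros s n Hs. apply pow_incr. split; [apply Rabs_pos | apply Rlt_le, Hb, Hs]. }
  assert (Hgeo : ex_series (fun k => ((1 + Rabs c)/2)^k)).
  { apply ex_series_geom. rewrite Rabs_pos_eq; pose proof (Rabs_pos c); lra. }
  replace ((cos t + c) / (1 + 2 * c * cos t + c^2))
    with (Series (fun k => (-1)^k * cos (INR (S k) * t) * c^k)).
  - apply (derivable_pt_lim_Series (log_mod_term t) (fun k s => (-1)^k * cos (INR (S k) * t) * s^k)
             (fun k => ((1 + Rabs c)/2)^k) 0 rho); auto.
    + unfold Boule; simpl. rewrite Rminus_0_r. pose proof (Rabs_pos c); lra.
    + intros; apply log_mod_term_deriv.
    + intros. apply ex_derive_continuity_pt. auto_derive. auto.
    + intros n y Hy. rewrite Rabs_mult, <- RPow_abs.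
      pose proof (sign_mul_cos_bound n t). pose proof (Hpow y n Hy).
      pose proof (pow_le _ n (Rabs_pos y)). pose proof (Rabs_pos ((-1)^n * cos (INR (S n) * t))). nra.
    + intros y Hy. apply (ex_series_le (fun k => log_mod_term t k y) (fun k => ((1 + Rabs c)/2)^k)); auto.
      intros k. eapply Rle_trans; [apply log_mod_term_bound|]. eapply Rle_trans; [apply Hpow, Hy|].
      simpl. pose proof (pow_le ((1 + Rabs c)/2) k ltac:(pose proof (Rabs_pos c); lra)). nra.
  - assert (0 < 1 + 2 * c * cos t + c^2) by (apply quad_cos_pos, Hc).
    rewrite (Series_ext _ (fun k => (-c)^k * cos (INR (S k) * t))).
    + rewrite Series_geom_cos by (rewrite Rabs_Ropp; exact Hc). field. lra.
    + intros k. replace (- c) with ((-1) * c) by ring. rewrite Rpow_mult_distr. ring.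
Qed.

Lemma Series_log_mod_term t r : 0 <= r < 1 ->
  Series (fun k => log_mod_term t k r) = ln (1 + 2 * r * cos t + r^2) / 2.
Proof.
  intros Hr.
  set (D := fun s => Series (fun k => log_mod_term t k s) - ln (1 + 2 * s * cos t + s^2) / 2).
  assert (HD : D r = D 0).
  { apply eq_of_derivable_pt_lim_0; [lra|]. intros c Hc. unfold D.
    assert (Hc' : Rabs c < 1) by (rewrite Rabs_pos_eq; lra).
    assert (0 < 1 + 2 * c * cos t + c^2) by (apply quad_cos_pos, Hc').
    replace 0 with ((cos t + c) / (1 + 2 * c * cos t + c^2) - (cos t + c) / (1 + 2 * c * cos t + c^2)) by ring.
    apply derivable_pt_lim_minus; [apply Series_log_mod_term_deriv, Hc'|].
    apply is_derive_Reals. auto_derive; [lra | field; lra]. }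
  assert (D0 : D 0 = 0).
  { unfold D. rewrite (Series_ext _ (fun _ => 0)).
    - rewrite Series_0. replace (1 + 2 * 0 * cos t + 0^2) with 1 by ring. rewrite ln_1. field.
    - intros k. unfold log_mod_term. simpl. ring. }
  unfold D in *. lra.
Qed.

(** * Abel regularisation *)

(* ln |1 + r e^{2 i PI x}| and its x-derivative. *)
Definition log_mod (r x : R) : R := ln (1 + 2 * r * cos (2*PI*x) + r^2) / 2.
Definition log_mod_dx (r x : R) : R :=
  - 2 * PI * r * sin (2*PI*x) / (1 + 2 * r * cos (2*PI*x) + r^2).

Lemma log_mod_deriv r x : 0 <= r < 1 -> derivable_pt_lim (log_mod r) x (log_mod_dx r x).
Proof.
  intros Hr. assert (0 < 1 + 2 * r * cos (2*PI*x) + r^2) by (apply quad_cos_pos; rewrite Rabs_pos_eq; lra).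
  apply is_derive_Reals. unfold log_mod, log_mod_dx. auto_derive; [lra | field; lra].
Qed.

(* As r -> 1, -log_mod_dx r x tends to PI tan (PI x), the derivative of -ln (2 cos (PI x)). *)
Lemma tan_add_log_mod_dx_bound r x : 0 <= r < 1 -> 0 <= x <= 1/6 ->
  Rabs (PI * tan (PI*x) + log_mod_dx r x) <= 2 * PI * (1 - r)^2.
Proof.
  intros Hr Hx. pose proof PI_RGT_0.
  assert (Hc : 3/4 <= cos (PI*x)^2 /\ 1/2 <= cos (PI*x)).
  { assert (cos (PI/6) <= cos (PI*x)) by (apply cos_decr_1; nra).
    rewrite cos_PI6 in *.
    assert (sqrt 3 * sqrt 3 = 3) by (apply sqrt_sqrt; lra).
    assert (0 < sqrt 3) by (apply sqrt_lt_R0; lra).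
    split; nra. }
  assert (Hs : 0 <= sin (PI*x) <= 1) by (split; [apply sin_ge_0; nra | apply SIN_bound]).
  unfold log_mod_dx, tan.
  replace (2*PI*x) with (2*(PI*x)) by ring. rewrite sin_2a, cos_2a_cos.
  set (s := sin (PI*x)) in *. set (c := cos (PI*x)) in *.
  assert (HD : 1 <= (1 - r)^2 + 4 * r * c^2) by nra.
  replace (PI * (s / c) + - 2 * PI * r * (2 * s * c) / (1 + 2 * r * (2 * c * c - 1) + r ^ 2))
    with (PI * s * (1 - r)^2 / (c * ((1 - r)^2 + 4 * r * c^2))) by (field; split; nra).
  rewrite Rabs_pos_eq by (apply Rmult_le_pos; [apply Rmult_le_pos; nra | apply Rlt_le, Rinv_0_lt_compat; nra]).
  apply (Rmult_le_reg_r (c * ((1 - r)^2 + 4 * r * c^2))); [nra|].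
  unfold Rdiv. rewrite Rmult_assoc, Rinv_l, Rmult_1_r by nra.
  assert (0 <= (1 - r)^2) by nra.
  assert (PI * s * (1 - r)^2 <= PI * (1 - r)^2) by (apply Rmult_le_compat_r; nra).
  assert (1 <= 2 * (c * ((1 - r)^2 + 4 * r * c^2))) by nra.
  assert (PI * (1 - r)^2 * 1 <= PI * (1 - r)^2 * (2 * (c * ((1 - r)^2 + 4 * r * c^2))))
    by (apply Rmult_le_compat_l; nra).
  lra.
Qed.

Definition int_log_mod_term (r : R) (k : nat) (x : R) : R :=
  (-1)^k * sin (INR (S k) * (2*PI*x)) / INR (S k)^2 * r^(S k).
Definition int_x_log_mod_term (r : R) (k : nat) (x : R) : R :=
  (-1)^k / INR (S k) * r^(S k) *
  (x * sin (INR (S k) * (2*PI*x)) / (2*PI*INR (S k))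
   + (cos (INR (S k) * (2*PI*x)) - 1) / (4*PI^2*INR (S k)^2)).

(* Primitives vanishing at 0 of 2 PI log_mod r and of x log_mod r x, obtained by termwise
   integration of the Fourier series. *)
Definition int_log_mod (r x : R) : R := Series (fun k => int_log_mod_term r k x).
Definition int_x_log_mod (r x : R) : R := Series (fun k => int_x_log_mod_term r k x).

Lemma INR_S_ge1 k : 1 <= INR (S k).
Proof. rewrite S_INR. pose proof (pos_INR k). lra. Qed.

(* [auto_derive] unfolds [INR (S k)]; this folds it back. *)
Ltac fold_INR_S k := change (match k with 0%nat => 1 | S _ => INR k + 1 end) with (INR (S k)) in *.

Lemma int_log_mod_term_deriv r k x :
  derivable_pt_lim (int_log_mod_term r k) x (2*PI * log_mod_term (2*PI*x) k r).
Proof.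
  pose proof (INR_S_ge1 k). apply is_derive_Reals. unfold int_log_mod_term, log_mod_term.
  auto_derive; auto. fold_INR_S k. rewrite <- ?tech_pow_Rmult. field. lra.
Qed.

Lemma int_x_log_mod_term_deriv r k x :
  derivable_pt_lim (int_x_log_mod_term r k) x (x * log_mod_term (2*PI*x) k r).
Proof.
  pose proof (INR_S_ge1 k). pose proof PI_RGT_0. apply is_derive_Reals.
  unfold int_x_log_mod_term, log_mod_term. auto_derive; [repeat split; nra|].
  fold_INR_S k. rewrite <- ?tech_pow_Rmult. field. split; lra.
Qed.

Lemma pow_succ_le r k : 0 <= r <= 1 -> r^(S k) <= r^k.
Proof. intros. simpl. pose proof (pow_le r k ltac:(lra)). nra. Qed.

Lemma int_log_mod_term_bound r k x : 0 <= r < 1 -> Rabs (int_log_mod_term r k x) <= r^k.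
Proof.
  intros Hr. pose proof (INR_S_ge1 k). unfold int_log_mod_term, Rdiv.
  rewrite !Rabs_mult, pow_1_abs, Rmult_1_l, (Rabs_pos_eq (r^(S k))) by (apply pow_le; lra).
  rewrite (Rabs_pos_eq (/ _)) by (apply Rlt_le, Rinv_0_lt_compat, pow_lt; lra).
  assert (Rabs (sin (INR (S k) * (2 * PI * x))) <= 1) by (apply Rabs_le, SIN_bound).
  assert (/ INR (S k)^2 <= 1).
  { rewrite <- Rinv_1. apply Rinv_le_contravar; [lra|]. rewrite <- (pow1 2). apply pow_incr; lra. }
  assert (0 <= / INR (S k)^2) by (apply Rlt_le, Rinv_0_lt_compat, pow_lt; lra).
  pose proof (Rabs_pos (sin (INR (S k) * (2 * PI * x)))).
  pose proof (pow_succ_le r k ltac:(lra)). pose proof (pow_le r (S k) ltac:(lra)).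
  assert (Rabs (sin (INR (S k) * (2 * PI * x))) * / INR (S k) ^ 2 <= 1) by nra.
  nra.
Qed.

Lemma int_x_log_mod_term_bound r k x :
  0 <= r < 1 -> Rabs x < 1 -> Rabs (int_x_log_mod_term r k x) <= 2 * r^k.
Proof.
  intros Hr Hx. pose proof (INR_S_ge1 k). pose proof PI2_3_2. unfold int_x_log_mod_term.
  set (m := INR (S k)) in *.
  set (u := sin (m * (2 * PI * x))). set (v := cos (m * (2 * PI * x))).
  assert (Hu : Rabs u <= 1) by (apply Rabs_le, SIN_bound).
  assert (Hv : Rabs v <= 1) by (apply Rabs_le, COS_bound).
  assert (A : Rabs (x * u / (2 * PI * m)) <= 1).
  { unfold Rdiv. rewrite !Rabs_mult, (Rabs_pos_eq (/ _)) by (apply Rlt_le, Rinv_0_lt_compat; nra).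
    assert (/ (2*PI*m) <= 1) by (rewrite <- Rinv_1; apply Rinv_le_contravar; nra).
    assert (0 <= / (2*PI*m)) by (apply Rlt_le, Rinv_0_lt_compat; nra).
    pose proof (Rabs_pos x). pose proof (Rabs_pos u).
    assert (Rabs x * Rabs u <= 1) by nra. nra. }
  assert (B : Rabs ((v - 1) / (4 * PI^2 * m^2)) <= 1).
  { assert (Hpm : 2 <= 4*PI^2*m^2).
    { assert (1 <= m^2) by (rewrite <- (pow1 2); apply pow_incr; lra).
      assert (1 <= PI^2) by (rewrite <- (pow1 2); apply pow_incr; lra). nra. }
    unfold Rdiv. rewrite !Rabs_mult, (Rabs_pos_eq (/ _)) by (apply Rlt_le, Rinv_0_lt_compat; lra).
    assert (/ (4*PI^2*m^2) <= 1/2) by (replace (1/2) with (/2) by field; apply Rinv_le_contravar; lra).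
    assert (0 <= / (4*PI^2*m^2)) by (apply Rlt_le, Rinv_0_lt_compat; lra).
    assert (Rabs (v - 1) <= 2) by (apply Rabs_le; apply Rabs_le_between in Hv; lra).
    pose proof (Rabs_pos (v - 1)). nra. }
  assert (C : Rabs ((-1)^k / m * r^(S k)) <= r^k).
  { unfold Rdiv. rewrite !Rabs_mult, pow_1_abs, Rmult_1_l.
    rewrite (Rabs_pos_eq (/ m)), (Rabs_pos_eq (r^(S k)))
      by (try apply pow_le; try apply Rlt_le, Rinv_0_lt_compat; lra).
    assert (/ m <= 1) by (rewrite <- Rinv_1; apply Rinv_le_contravar; lra).
    assert (0 <= / m) by (apply Rlt_le, Rinv_0_lt_compat; lra).
    pose proof (pow_succ_le r k ltac:(lra)). pose proof (pow_le r (S k) ltac:(lra)). nra. }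
  rewrite Rabs_mult.
  pose proof (Rabs_triang (x * u / (2 * PI * m)) ((v - 1) / (4 * PI^2 * m^2))).
  pose proof (Rabs_pos ((-1)^k / m * r^(S k))).
  pose proof (Rabs_pos (x * u / (2 * PI * m) + (v - 1) / (4 * PI ^ 2 * m ^ 2))).
  nra.
Qed.

Definition unit_ball : posreal := mkposreal 1 ltac:(lra).

Lemma Rabs_lt_of_Boule_unit_ball y : Boule 0 unit_ball y -> Rabs y < 1.
Proof. unfold Boule. simpl. rewrite Rminus_0_r. tauto. Qed.

Lemma ex_series_scal_pow C r : 0 <= r < 1 -> ex_series (fun k => C * r^k).
Proof.
  intros Hr. apply (ex_series_scal_l C (fun k => r^k)), ex_series_geom. rewrite Rabs_pos_eq; lra.
Qed.

Lemma int_log_mod_deriv r x :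
  0 <= r < 1 -> Rabs x < 1 -> derivable_pt_lim (int_log_mod r) x (2 * PI * log_mod r x).
Proof.
  intros Hr Hx. pose proof PI_RGT_0.
  unfold log_mod. rewrite <- Series_log_mod_term, <- Series_scal_l by auto.
  apply (derivable_pt_lim_Series (int_log_mod_term r) (fun k x => 2 * PI * log_mod_term (2*PI*x) k r)
           (fun k => 2 * PI * r^k) 0 unit_ball).
  - unfold Boule; simpl; rewrite Rminus_0_r; auto.
  - intros; apply int_log_mod_term_deriv.
  - intros n y _. apply ex_derive_continuity_pt. unfold log_mod_term. auto_derive. auto.
  - intros n y _. rewrite Rabs_mult, (Rabs_pos_eq (2 * PI)) by lra.
    apply Rmult_le_compat_l; [lra|]. eapply Rle_trans; [apply log_mod_term_bound|].
    rewrite Rabs_pos_eq by lra. apply pow_succ_le. lra.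
  - apply ex_series_scal_pow; auto.
  - intros y _. apply (ex_series_le (fun k => int_log_mod_term r k y) (fun k => 1 * r^k)).
    + intros k. rewrite Rmult_1_l. apply int_log_mod_term_bound; auto.
    + apply ex_series_scal_pow; auto.
Qed.

Lemma int_x_log_mod_deriv r x :
  0 <= r < 1 -> Rabs x < 1 -> derivable_pt_lim (int_x_log_mod r) x (x * log_mod r x).
Proof.
  intros Hr Hx.
  unfold log_mod. rewrite <- Series_log_mod_term, <- Series_scal_l by auto.
  apply (derivable_pt_lim_Series (int_x_log_mod_term r) (fun k x => x * log_mod_term (2*PI*x) k r)
           (fun k => 1 * r^k) 0 unit_ball).
  - unfold Boule; simpl; rewrite Rminus_0_r; auto.
  - intros; apply int_x_log_mod_term_deriv.
  - intros n y _. apply ex_derive_continuity_pt. unfold log_mod_term. auto_derive. auto.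
  - intros n y Hy%Rabs_lt_of_Boule_unit_ball. rewrite Rabs_mult, Rmult_1_l.
    pose proof (log_mod_term_bound (2*PI*y) n r) as Hterm. rewrite (Rabs_pos_eq r) in Hterm by lra.
    pose proof (pow_succ_le r n ltac:(lra)).
    pose proof (Rabs_pos y). pose proof (Rabs_pos (log_mod_term (2 * PI * y) n r)). nra.
  - apply ex_series_scal_pow; auto.
  - intros y Hy%Rabs_lt_of_Boule_unit_ball.
    apply (ex_series_le (fun k => int_x_log_mod_term r k y) (fun k => 2 * r^k)).
    + intros k. apply int_x_log_mod_term_bound; auto.
    + apply ex_series_scal_pow; auto.
Qed.

Lemma int_log_mod_0 r : int_log_mod r 0 = 0.
Proof.
  unfold int_log_mod. rewrite (Series_ext _ (fun _ => 0)); [apply Series_0|].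
  intros k. unfold int_log_mod_term. rewrite !Rmult_0_r, sin_0. unfold Rdiv. ring.
Qed.

Lemma int_x_log_mod_0 r : int_x_log_mod r 0 = 0.
Proof.
  unfold int_x_log_mod. rewrite (Series_ext _ (fun _ => 0)); [apply Series_0|].
  intros k. unfold int_x_log_mod_term. rewrite !Rmult_0_r, cos_0. unfold Rdiv. ring.
Qed.

(* Abel-regularised versions of log_mcos2 and log_mcos3: PI tan (PI x) is replaced by
   -log_mod_dx r x, whose primitives are explicit. *)
Definition abel_log_mcos2 (r x : R) : R := x * log_mod r x - / (2*PI) * int_log_mod r x.
Definition abel_log_mcos3 (r x : R) : R := x^2 * log_mod r x - 2 * int_x_log_mod r x.

Lemma abel_log_mcos2_deriv r x :
  0 <= r < 1 -> Rabs x < 1 -> derivable_pt_lim (abel_log_mcos2 r) x (x^1 * log_mod_dx r x).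
Proof.
  intros Hr Hx. pose proof PI_RGT_0.
  replace (x^1 * log_mod_dx r x)
    with ((1 * log_mod r x + x * log_mod_dx r x) - / (2 * PI) * (2 * PI * log_mod r x)) by (field; lra).
  apply (derivable_pt_lim_minus (fun x => x * log_mod r x) (fun x => / (2*PI) * int_log_mod r x)).
  - apply (derivable_pt_lim_mult id); [apply derivable_pt_lim_id | apply log_mod_deriv; auto].
  - apply (derivable_pt_lim_scal (int_log_mod r)), int_log_mod_deriv; auto.
Qed.

Lemma abel_log_mcos3_deriv r x :
  0 <= r < 1 -> Rabs x < 1 -> derivable_pt_lim (abel_log_mcos3 r) x (x^2 * log_mod_dx r x).
Proof.
  intros Hr Hx.
  replace (x^2 * log_mod_dx r x)
    with ((2 * x * log_mod r x + x^2 * log_mod_dx r x) - 2 * (x * log_mod r x)) by ring.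
  apply (derivable_pt_lim_minus (fun x => x^2 * log_mod r x) (fun x => 2 * int_x_log_mod r x)).
  - apply (derivable_pt_lim_mult (fun x => x^2)); [|apply log_mod_deriv; auto].
    apply is_derive_Reals. auto_derive; auto. ring.
  - apply (derivable_pt_lim_scal (int_x_log_mod r)), int_x_log_mod_deriv; auto.
Qed.

Lemma abel_approx_bound p (f F : R -> R) r : 0 <= r < 1 -> f 0 = F 0 ->
  (forall x, 0 <= x <= 1/6 -> derivable_pt_lim f x (- x^p * (PI * tan (PI * x)))) ->
  (forall x, 0 <= x <= 1/6 -> derivable_pt_lim F x (x^p * log_mod_dx r x)) ->
  Rabs (f (1/6) - F (1/6)) <= PI / 3 * (1/6)^p * (1 - r)^2.
Proof.
  intros Hr Hf0 Hf HF. pose proof PI_RGT_0.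
  set (D := fun x => f x - F x).
  assert (HM : Rabs (D (1/6) - D 0) <= (1/6)^p * (2 * PI * (1 - r)^2) * Rabs (1/6 - 0)).
  { apply (Rabs_sub_le_MVT D (fun x => - x^p * (PI * tan (PI * x)) - x^p * log_mod_dx r x));
      rewrite Rmin_left, Rmax_right by lra.
    - intros c Hc. apply derivable_pt_lim_minus; auto.
    - intros c Hc.
      replace (- c^p * (PI * tan (PI * c)) - c^p * log_mod_dx r c)
        with (- c^p * (PI * tan (PI * c) + log_mod_dx r c)) by ring.
      rewrite Rabs_mult, Rabs_Ropp, (Rabs_pos_eq (c^p)) by (apply pow_le; lra).
      apply Rmult_le_compat; [apply pow_le; lra | apply Rabs_pos | apply pow_incr; lra |].
      apply tan_add_log_mod_dx_bound; auto. }
  unfold D in HM. rewrite Hf0, Rminus_diag, !Rminus_0_r, (Rabs_pos_eq (1/6)) in HM by lra.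
  eapply Rle_trans; [apply HM | apply Req_le; field].
Qed.

Lemma log_mcos2_abel_approx r :
  0 <= r < 1 -> Rabs (log_mcos2 (1/6) - abel_log_mcos2 r (1/6)) <= PI / 3 * (1/6)^1 * (1 - r)^2.
Proof.
  intros Hr. apply abel_approx_bound; auto.
  - unfold abel_log_mcos2. rewrite log_mcos2_0, int_log_mod_0. ring.
  - intros x Hx. apply log_mcos2_deriv. lra.
  - intros x Hx. apply abel_log_mcos2_deriv; auto. rewrite Rabs_pos_eq; lra.
Qed.

Lemma log_mcos3_abel_approx r :
  0 <= r < 1 -> Rabs (log_mcos3 (1/6) - abel_log_mcos3 r (1/6)) <= PI / 3 * (1/6)^2 * (1 - r)^2.
Proof.
  intros Hr. apply abel_approx_bound; auto.
  - unfold abel_log_mcos3. rewrite log_mcos3_0, int_x_log_mod_0. ring.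
  - intros x Hx. apply log_mcos3_deriv. lra.
  - intros x Hx. apply abel_log_mcos3_deriv; auto. rewrite Rabs_pos_eq; lra.
Qed.

Lemma is_lim_seq_one_sub_inv : is_lim_seq (fun n => 1 - / (INR n + 2)) 1.
Proof.
  replace (Finite 1) with (Rbar_minus 1 (Rbar_inv p_infty)) by (simpl; f_equal; ring).
  apply is_lim_seq_minus'; [apply is_lim_seq_const|].
  apply (is_lim_seq_inv (fun n => INR n + 2) p_infty); [|discriminate].
  eapply is_lim_seq_plus; [apply is_lim_seq_INR | apply is_lim_seq_const | reflexivity].
Qed.

Lemma eq_of_approx_at_left_1 A (Psi E : R -> R) :
  continuity_pt Psi 1 -> continuity_pt E 1 -> E 1 = 0 ->
  (forall t, 1/2 <= t < 1 -> Rabs (A - Psi t) <= E t) -> A = Psi 1.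
Proof.
  intros HP HE HE1 Hb.
  set (t := fun n => 1 - / (INR n + 2)).
  assert (Ht : forall n, 1/2 <= t n < 1).
  { intros n. unfold t. pose proof (pos_INR n).
    assert (0 < / (INR n + 2)) by (apply Rinv_0_lt_compat; lra).
    assert (/ (INR n + 2) <= /2) by (apply Rinv_le_contravar; lra). lra. }
  assert (HPsi : is_lim_seq (fun n => Psi (t n)) (Psi 1))
    by (apply is_lim_seq_continuous, is_lim_seq_one_sub_inv; auto).
  assert (HEt : is_lim_seq (fun n => E (t n)) 0)
    by (rewrite <- HE1; apply is_lim_seq_continuous, is_lim_seq_one_sub_inv; auto).
  assert (HA : is_lim_seq (fun n => Psi (t n)) A).
  { apply (is_lim_seq_le_le (fun n => A - E (t n)) _ (fun n => A + E (t n))).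
    - intros n. specialize (Hb (t n) (Ht n)). apply Rabs_le_between' in Hb. lra.
    - replace (Finite A) with (Rbar_minus A 0) by (simpl; f_equal; ring).
      apply is_lim_seq_minus'; auto. apply is_lim_seq_const.
    - replace (Finite A) with (Rbar_plus A 0) by (simpl; f_equal; ring).
      apply is_lim_seq_plus'; auto. apply is_lim_seq_const. }
  apply is_lim_seq_unique in HPsi, HA. rewrite HPsi in HA. injection HA. auto.
Qed.

Definition abel_reparam (t : R) : R := 2 * t / (1 + t^2).

Lemma abel_reparam_bound t : Rabs (abel_reparam t) <= 1.
Proof.
  unfold abel_reparam. assert (0 < 1 + t^2) by (simpl; nra).
  unfold Rdiv. rewrite Rabs_mult, (Rabs_pos_eq (/ _)) by (apply Rlt_le, Rinv_0_lt_compat; lra).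
  apply (Rmult_le_reg_r (1 + t^2)); auto. rewrite Rmult_assoc, Rinv_l, Rmult_1_r, Rmult_1_l by lra.
  pose proof (pow2_ge_0 (t - 1)). pose proof (pow2_ge_0 (t + 1)).
  apply Rabs_le. simpl in *. split; nra.
Qed.

Lemma abel_reparam_range t : 0 <= t < 1 -> 0 <= abel_reparam t < 1.
Proof.
  intros Ht. unfold abel_reparam. assert (0 < 1 + t^2) by (simpl; nra).
  split.
  - apply Rmult_le_pos; [lra | apply Rlt_le, Rinv_0_lt_compat; lra].
  - apply (Rmult_lt_reg_r (1 + t^2)); auto. unfold Rdiv. rewrite Rmult_assoc, Rinv_l by lra.
    simpl; nra.
Qed.

Lemma abel_reparam_1 : abel_reparam 1 = 1.
Proof. unfold abel_reparam. field. Qed.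

Lemma abel_reparam_continuity t : continuity_pt abel_reparam t.
Proof.
  apply ex_derive_continuity_pt. unfold abel_reparam. auto_derive. simpl. nra.
Qed.

Definition half_ball : posreal := mkposreal (1/2) ltac:(lra).

(* A form of Abel's theorem for series dominated by C/(k+1)^2.
   Composing with [abel_reparam], which maps R onto [-1, 1] and fixes 1, turns the
   one-sided continuity at r = 1 into continuity on a whole ball around 1. *)
Lemma eq_of_abel_approx A (h : R -> R) (b : nat -> R) C c :
  continuity_pt h 1 ->
  (forall k, Rabs (b k) <= C * / (INR k + 1)^2) ->
  (forall r, 0 <= r < 1 -> Rabs (A - (h r + Series (fun k => b k * r^(S k)))) <= c * (1 - r)^2) ->
  A = h 1 + Series b.
Proof.
  intros Hh Hb Happrox.
  set (Psi := fun t => h (abel_reparam t) + Series (fun k => b k * abel_reparam t ^ (S k))).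
  replace (h 1 + Series b) with (Psi 1).
  2:{ unfold Psi. rewrite abel_reparam_1. f_equal. apply Series_ext. intros; rewrite pow1; ring. }
  apply (eq_of_approx_at_left_1 A Psi (fun t => c * (1 - abel_reparam t)^2)).
  - apply (continuity_pt_plus (fun t => h (abel_reparam t))).
    + apply (continuity_pt_comp abel_reparam h); [apply abel_reparam_continuity|].
      rewrite abel_reparam_1. exact Hh.
    + apply (continuity_pt_Series _ (fun k => C * / (INR k + 1)^2) 1 half_ball).
      * intros n y _. rewrite Rabs_mult, <- RPow_abs.
        pose proof (abel_reparam_bound y). pose proof (Rabs_pos (abel_reparam y)) as Hpos.
        assert (Rabs (abel_reparam y) ^ S n <= 1) by (rewrite <- (pow1 (S n)); apply pow_incr; lra).
        pose proof (pow_le _ (S n) Hpos). pose proof (Rabs_pos (b n)). specialize (Hb n). nra.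
      * apply (ex_series_scal_l C (fun k => / (INR k + 1)^2)), ex_series_inv_succ_sq.
      * unfold Boule. rewrite Rminus_eq_0, Rabs_R0. simpl; lra.
      * intros n y _. apply (continuity_pt_mult (fun _ => b n)); [apply continuity_pt_const; intros ? ?; auto|].
        apply (continuity_pt_comp abel_reparam (fun z => z ^ S n)); [apply abel_reparam_continuity|].
        apply derivable_continuous_pt, derivable_pt_pow.
  - apply (continuity_pt_comp abel_reparam (fun r => c * (1 - r)^2)); [apply abel_reparam_continuity|].
    apply ex_derive_continuity_pt. auto_derive. auto.
  - rewrite abel_reparam_1. ring.
  - intros t Ht. apply Happrox, abel_reparam_range. lra.
Qed.

(** * Characters and the values of sin and cos at multiples of PI/3 *)

Lemma nat_ind_period6 (P : nat -> Prop) :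
  (forall k, (k < 6)%nat -> P k) -> (forall k, P k -> P (k + 6)%nat) -> forall k, P k.
Proof.
  intros Hb Hs k. induction k as [k IH] using lt_wf_ind.
  destruct (lt_dec k 6) as [H|H]; [apply Hb; auto|].
  replace k with ((k - 6) + 6)%nat by lia. apply Hs, IH. lia.
Qed.

Lemma chi3_add6 n : chi3 (n + 6) = chi3 n.
Proof. unfold chi3. replace (n + 6)%nat with (n + 2 * 3)%nat by lia. rewrite Nat.Div0.mod_add. auto. Qed.

Lemma chi6_add6 n : chi6 (n + 6) = chi6 n.
Proof. unfold chi6. replace (n + 6)%nat with (n + 1 * 6)%nat by lia. rewrite Nat.Div0.mod_add. auto. Qed.

Lemma chi3_bound n : Rabs (chi3 n) <= 1.
Proof. unfold chi3. destruct (n mod 3)%nat as [|[|[|]]]; rewrite ?Rabs_R0, ?Rabs_R1, ?Rabs_m1; lra. Qed.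

Lemma chi6_bound n : Rabs (chi6 n) <= 1.
Proof.
  unfold chi6. destruct (n mod 6)%nat as [|[|[|[|[|[|]]]]]]; rewrite ?Rabs_R0, ?Rabs_R1, ?Rabs_m1; lra.
Qed.

Definition dvd_ind (d m : nat) : R := if (m mod d =? 0)%nat then 1 else 0.

Lemma dvd_ind_add_mul d m j : dvd_ind d (m + j * d) = dvd_ind d m.
Proof. unfold dvd_ind. rewrite Nat.Div0.mod_add. reflexivity. Qed.

Lemma dvd_ind_mod d m r : (r < d)%nat -> dvd_ind d (r + m * d) = if (r =? 0)%nat then 1 else 0.
Proof. intros Hr. rewrite dvd_ind_add_mul. unfold dvd_ind. rewrite Nat.mod_small; auto. Qed.

Lemma dvd_ind_bound d m : Rabs (dvd_ind d m) <= 1.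
Proof. unfold dvd_ind. destruct (_ =? _)%nat; rewrite ?Rabs_R0, ?Rabs_R1; lra. Qed.

Lemma sin_add_2PI x : sin (x + 2 * PI) = sin x.
Proof. rewrite sin_plus, sin_2PI, cos_2PI. ring. Qed.

Lemma cos_add_2PI x : cos (x + 2 * PI) = cos x.
Proof. rewrite cos_plus, sin_2PI, cos_2PI. ring. Qed.

Lemma INR_S_add6_mul_pi3 k : INR (S (k + 6)) * (2 * PI * (1/6)) = INR (S k) * (2 * PI * (1/6)) + 2 * PI.
Proof. rewrite !S_INR, plus_INR. simpl. field. Qed.

Lemma sign_sin_pi3_chi3 k :
  (-1)^k * sin (INR (S k) * (2 * PI * (1/6))) = sqrt 3 / 2 * chi3 (S k).
Proof.
  revert k. apply nat_ind_period6.
  - intros k Hk.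
    destruct k as [|[|[|[|[|[|k]]]]]]; try lia; unfold chi3; simpl Nat.modulo; cbv iota.
    + replace (INR 1 * (2 * PI * (1/6))) with (PI/3) by (simpl; field).
      rewrite sin_PI3. simpl; ring.
    + replace (INR 2 * (2 * PI * (1/6))) with (2*(PI/3)) by (simpl; field).
      rewrite sin_2PI3. simpl; ring.
    + replace (INR 3 * (2 * PI * (1/6))) with PI by (simpl; field). rewrite sin_PI. simpl; ring.
    + replace (INR 4 * (2 * PI * (1/6))) with (PI/3 + PI) by (simpl; field).
      rewrite neg_sin, sin_PI3. simpl; ring.
    + replace (INR 5 * (2 * PI * (1/6))) with (2*(PI/3) + PI) by (simpl; field).
      rewrite neg_sin, sin_2PI3. simpl; ring.
    + replace (INR 6 * (2 * PI * (1/6))) with (2*PI) by (simpl; field).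
      rewrite sin_2PI. simpl; ring.
  - intros k H. rewrite pow_add, INR_S_add6_mul_pi3, sin_add_2PI.
    replace (S (k + 6)) with (S k + 6)%nat by lia. rewrite chi3_add6, <- H. simpl. ring.
Qed.

Lemma sign_cos_pi3_dvd_ind k :
  (-1)^k * (cos (INR (S k) * (2 * PI * (1/6))) - 1) = - 1/2 + 2 * dvd_ind 2 (S k) - 3/2 * dvd_ind 3 (S k).
Proof.
  revert k. apply nat_ind_period6.
  - intros k Hk.
    destruct k as [|[|[|[|[|[|k]]]]]]; try lia; unfold dvd_ind; simpl Nat.modulo; simpl Nat.eqb; cbv iota.
    + replace (INR 1 * (2 * PI * (1/6))) with (PI/3) by (simpl; field).
      rewrite cos_PI3. simpl; field.
    + replace (INR 2 * (2 * PI * (1/6))) with (2*(PI/3)) by (simpl; field).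
      rewrite cos_2PI3. simpl; field.
    + replace (INR 3 * (2 * PI * (1/6))) with PI by (simpl; field). rewrite cos_PI. simpl; field.
    + replace (INR 4 * (2 * PI * (1/6))) with (PI/3 + PI) by (simpl; field).
      rewrite neg_cos, cos_PI3. simpl; field.
    + replace (INR 5 * (2 * PI * (1/6))) with (2*(PI/3) + PI) by (simpl; field).
      rewrite neg_cos, cos_2PI3. simpl; field.
    + replace (INR 6 * (2 * PI * (1/6))) with (2*PI) by (simpl; field).
      rewrite cos_2PI. simpl; field.
  - intros k H. rewrite pow_add, INR_S_add6_mul_pi3, cos_add_2PI.
    replace (S (k + 6)) with (S k + 3 * 2)%nat by lia. rewrite dvd_ind_add_mul.
    replace (S k + 3 * 2)%nat with (S k + 2 * 3)%nat by lia. rewrite dvd_ind_add_mul, <- H.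
    simpl. ring.
Qed.

Lemma chi3_S_2n1 n : chi3 (S (2*n+1)) = - chi3 (S n).
Proof.
  revert n. apply nat_ind_period6.
  - intros k Hk. destruct k as [|[|[|[|[|[|k]]]]]]; try lia; unfold chi3; simpl; lra.
  - intros k H. replace (S (2 * (k + 6) + 1)) with (S (2*k+1) + 6 + 6)%nat by lia.
    replace (S (k + 6)) with (S k + 6)%nat by lia. rewrite !chi3_add6. auto.
Qed.

Lemma chi6_S_2n n : chi6 (S (2*n)) = chi3 (S (2*n)).
Proof.
  revert n. apply nat_ind_period6.
  - intros k Hk. destruct k as [|[|[|[|[|[|k]]]]]]; try lia; unfold chi3, chi6; simpl; lra.
  - intros k H. replace (S (2 * (k + 6))) with (S (2*k) + 6 + 6)%nat by lia.
    rewrite !chi3_add6, !chi6_add6. auto.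
Qed.

Lemma chi6_S_2n1 n : chi6 (S (2*n+1)) = 0.
Proof.
  revert n. apply nat_ind_period6.
  - intros k Hk. destruct k as [|[|[|[|[|[|k]]]]]]; try lia; unfold chi6; simpl; lra.
  - intros k H. replace (S (2 * (k + 6) + 1)) with (S (2*k+1) + 6 + 6)%nat by lia.
    rewrite !chi6_add6. auto.
Qed.

Lemma ex_series_bounded_div_pow (c : nat -> R) p : (2 <= p)%nat -> (forall n, Rabs (c n) <= 1) ->
  ex_series (fun n => c n / INR (S n) ^ p).
Proof.
  intros Hp Hc. apply (ex_series_le_inv_succ_sq _ 1). intros n.
  assert (HS : 1 <= INR (S n)) by (rewrite S_INR; pose proof (pos_INR n); lra).
  assert (Hpow : / INR (S n) ^ p <= / (INR n + 1)^2).
  { rewrite <- S_INR. apply Rinv_le_contravar; [apply pow_lt; lra|].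
    replace p with (2 + (p - 2))%nat by lia. rewrite pow_add.
    assert (1 <= INR (S n) ^ (p - 2)) by (apply pow_R1_Rle; lra).
    assert (0 <= INR (S n) ^ 2) by (apply pow_le; lra). nra. }
  unfold Rdiv. rewrite Rabs_mult, (Rabs_pos_eq (/ _)), Rmult_1_l
    by (apply Rlt_le, Rinv_0_lt_compat, pow_lt; lra).
  assert (0 <= / INR (S n) ^ p) by (apply Rlt_le, Rinv_0_lt_compat, pow_lt; lra).
  specialize (Hc n). pose proof (Rabs_pos (c n)). nra.
Qed.

Lemma INR_S_block_last d n : INR (S (S d * n + d)) = INR (S d) * INR (S n).
Proof. rewrite <- mult_INR. f_equal. lia. Qed.

(* L(2, chi6) is the sum of the odd-index terms of L(2, chi3), and the even-index terms of
   L(2, chi3) add up to -L(2, chi3)/4. *)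
Lemma Lfun_chi6_2 : Lfun chi6 2 = 5/4 * Lfun chi3 2.
Proof.
  unfold Lfun.
  set (t := fun n => chi3 (S n) / INR (S n) ^ 2).
  set (s := fun n => chi6 (S n) / INR (S n) ^ 2).
  assert (Ht : ex_series t) by (apply ex_series_bounded_div_pow; auto; intros; apply chi3_bound).
  assert (Hs : ex_series s) by (apply ex_series_bounded_div_pow; auto; intros; apply chi6_bound).
  destruct (Series_group2 t Ht) as [Htp Et]. destruct (Series_group2 s Hs) as [_ Es].
  fold t s. rewrite <- Et, <- Es.
  assert (E1 : forall n, s (2*n)%nat + s (2*n+1)%nat = t (2*n)%nat).
  { intros n. unfold s, t. rewrite chi6_S_2n, chi6_S_2n1. unfold Rdiv. ring. }
  assert (E2 : forall n, t (2*n+1)%nat = - / 4 * t n).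
  { intros n. unfold t. rewrite chi3_S_2n1, (INR_S_block_last 1 n). simpl (INR 2).
    field. apply not_0_INR. lia. }
  rewrite (Series_ext _ _ E1).
  assert (Ho : ex_series (fun n => t (2*n+1)%nat)).
  { apply (ex_series_ext (fun n => - / 4 * t n)); [intros; rewrite E2; auto|].
    apply (ex_series_scal_l (- / 4) t), Ht. }
  assert (He : ex_series (fun n => t (2*n)%nat)).
  { apply (ex_series_ext (fun n => (t (2*n)%nat + t (2*n+1)%nat) - t (2*n+1)%nat)); [intros; simpl; ring|].
    apply (ex_series_minus (fun n => t (2*n)%nat + t (2*n+1)%nat)); auto. }
  assert (HB : Series t = Series (fun n => t (2*n)%nat) + - / 4 * Series t).
  { rewrite <- Et at 1. rewrite Series_plus by auto.
    rewrite (Series_ext (fun n => t (2*n+1)%nat) _ E2), Series_scal_l. auto. }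
  rewrite Et. lra.
Qed.

Lemma ex_series_zeta3 : ex_series (fun n => 1 / INR (S n) ^ 3).
Proof. apply ex_series_bounded_div_pow; auto. intros; rewrite Rabs_R1; lra. Qed.

Lemma Series_dvd_ind2_div_cube : Series (fun n => dvd_ind 2 (S n) / INR (S n) ^ 3) = / 8 * zeta3.
Proof.
  set (w := fun n => dvd_ind 2 (S n) / INR (S n) ^ 3).
  assert (Hw : ex_series w) by (apply ex_series_bounded_div_pow; auto; intros; apply dvd_ind_bound).
  destruct (Series_group2 w Hw) as [_ <-].
  unfold zeta3. rewrite <- Series_scal_l. apply Series_ext. intros n. unfold w.
  replace (S (2*n)) with (1 + n * 2)%nat by lia.
  replace (S (2*n+1)) with (0 + (S n) * 2)%nat by lia.
  rewrite !dvd_ind_mod by lia. simpl Nat.eqb. cbv iota.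
  replace (0 + S n * 2)%nat with (S (2 * n + 1)) by lia.
  rewrite (INR_S_block_last 1 n). simpl (INR 2). field. split; apply not_0_INR; lia.
Qed.

Lemma Series_dvd_ind3_div_cube : Series (fun n => dvd_ind 3 (S n) / INR (S n) ^ 3) = / 27 * zeta3.
Proof.
  set (w := fun n => dvd_ind 3 (S n) / INR (S n) ^ 3).
  assert (Hw : ex_series w) by (apply ex_series_bounded_div_pow; auto; intros; apply dvd_ind_bound).
  rewrite <- (Series_group3 w Hw).
  unfold zeta3. rewrite <- Series_scal_l. apply Series_ext. intros n. unfold w.
  replace (S (3*n)) with (1 + n * 3)%nat by lia.
  replace (S (3*n+1)) with (2 + n * 3)%nat by lia.
  replace (S (3*n+2)) with (0 + (S n) * 3)%nat by lia.
  rewrite !dvd_ind_mod by lia. simpl Nat.eqb. cbv iota.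
  replace (0 + S n * 3)%nat with (S (3 * n + 2)) by lia.
  rewrite (INR_S_block_last 2 n). simpl (INR 3). field. repeat split; apply not_0_INR; lia.
Qed.

(** * The values at x = 1/6 *)

Definition sin_sixth_coef (k : nat) : R :=
  (-1)^k * sin (INR (S k) * (2*PI*(1/6))) / INR (S k)^2.
Definition cos_sixth_coef (k : nat) : R :=
  (-1)^k * (cos (INR (S k) * (2*PI*(1/6))) - 1) / INR (S k)^3.

Lemma sin_sixth_coef_bound k : Rabs (sin_sixth_coef k) <= 1 * / (INR k + 1)^2.
Proof.
  unfold sin_sixth_coef. rewrite <- S_INR, Rmult_1_l.
  assert (Hu : Rabs (sin (INR (S k) * (2 * PI * (1/6)))) <= 1) by (apply Rabs_le, SIN_bound).
  set (u := sin (INR (S k) * (2 * PI * (1/6)))) in *.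
  assert (HS : 1 <= INR (S k)) by (rewrite S_INR; pose proof (pos_INR k); lra).
  unfold Rdiv. rewrite Rabs_mult, (Rabs_pos_eq (/ _)) by (apply Rlt_le, Rinv_0_lt_compat, pow_lt; lra).
  rewrite Rabs_mult, pow_1_abs, Rmult_1_l.
  assert (0 <= / INR (S k) ^ 2) by (apply Rlt_le, Rinv_0_lt_compat, pow_lt; lra).
  pose proof (Rabs_pos u). nra.
Qed.

Lemma cos_sixth_coef_bound k : Rabs (cos_sixth_coef k) <= 2 * / (INR k + 1)^2.
Proof.
  unfold cos_sixth_coef. rewrite <- S_INR.
  assert (Hv : Rabs ((-1) ^ k * (cos (INR (S k) * (2 * PI * (1/6))) - 1)) <= 2).
  { rewrite Rabs_mult, pow_1_abs, Rmult_1_l. apply Rabs_le.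
    pose proof (COS_bound (INR (S k) * (2 * PI * (1/6)))). lra. }
  set (v := (-1) ^ k * (cos (INR (S k) * (2 * PI * (1/6))) - 1)) in *.
  assert (HS : 1 <= INR (S k)) by (rewrite S_INR; pose proof (pos_INR k); lra).
  unfold Rdiv. rewrite Rabs_mult, (Rabs_pos_eq (/ _)) by (apply Rlt_le, Rinv_0_lt_compat, pow_lt; lra).
  assert (/ INR (S k) ^ 3 <= / INR (S k) ^ 2).
  { apply Rinv_le_contravar; [apply pow_lt; lra|].
    replace (INR (S k) ^ 3) with (INR (S k) ^ 2 * INR (S k)) by ring.
    assert (0 <= INR (S k) ^ 2) by (apply pow_le; lra). nra. }
  assert (0 <= / INR (S k) ^ 3) by (apply Rlt_le, Rinv_0_lt_compat, pow_lt; lra).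
  pose proof (Rabs_pos v). nra.
Qed.

Lemma Series_sin_sixth_coef : Series sin_sixth_coef = sqrt 3 / 2 * Lfun chi3 2.
Proof.
  unfold Lfun. rewrite <- Series_scal_l. apply Series_ext. intros k.
  unfold sin_sixth_coef. rewrite sign_sin_pi3_chi3. field. apply not_0_INR. lia.
Qed.

Lemma Series_cos_sixth_coef : Series cos_sixth_coef = - 11/36 * zeta3.
Proof.
  set (z := fun k => 1 / INR (S k)^3).
  set (w2 := fun k => dvd_ind 2 (S k) / INR (S k)^3).
  set (w3 := fun k => dvd_ind 3 (S k) / INR (S k)^3).
  assert (H2 : ex_series w2) by (apply ex_series_bounded_div_pow; auto; intros; apply dvd_ind_bound).
  assert (H3 : ex_series w3) by (apply ex_series_bounded_div_pow; auto; intros; apply dvd_ind_bound).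
  rewrite (Series_ext _ (fun k => (- 1/2 * z k + 2 * w2 k) - 3/2 * w3 k)).
  2:{ intros k. unfold cos_sixth_coef, z, w2, w3, Rdiv.
      rewrite sign_cos_pi3_dvd_ind. field. apply not_0_INR; lia. }
  rewrite Series_minus, Series_plus, !Series_scal_l.
  - unfold z, w2, w3. rewrite Series_dvd_ind2_div_cube, Series_dvd_ind3_div_cube. fold zeta3. field.
  - apply (ex_series_scal_l (- 1/2) z), ex_series_zeta3.
  - apply (ex_series_scal_l 2 w2), H2.
  - apply (ex_series_plus (fun k => - 1/2 * z k) (fun k => 2 * w2 k)).
    + apply (ex_series_scal_l (- 1/2) z), ex_series_zeta3.
    + apply (ex_series_scal_l 2 w2), H2.
  - apply (ex_series_scal_l (3/2) w3), H3.
Qed.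

Lemma log_mod_sixth r : log_mod r (1/6) = ln (1 + r + r^2) / 2.
Proof.
  unfold log_mod. replace (2*PI*(1/6)) with (PI/3) by field. rewrite cos_PI3.
  f_equal. f_equal. field.
Qed.

Lemma log_mcos2_sixth :
  log_mcos2 (1/6) = 1/6 * (ln 3 / 2) - / (2*PI) * (sqrt 3 / 2 * Lfun chi3 2).
Proof.
  pose proof PI_RGT_0.
  rewrite <- Series_sin_sixth_coef, <- Series_scal_l.
  replace (ln 3) with (ln (1 + 1 + 1^2)) by (f_equal; ring).
  unfold Rminus. rewrite <- Series_opp.
  apply (eq_of_abel_approx _ (fun r => 1/6 * (ln (1 + r + r^2) / 2)) _ (/ (2*PI)) (PI / 3 * (1/6)^1)).
  - apply ex_derive_continuity_pt. auto_derive. lra.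
  - intros k. rewrite Rabs_Ropp, Rabs_mult, Rabs_pos_eq by (apply Rlt_le, Rinv_0_lt_compat; lra).
    apply Rmult_le_compat_l; [apply Rlt_le, Rinv_0_lt_compat; lra|].
    rewrite <- (Rmult_1_l (/ (INR k + 1)^2)). apply sin_sixth_coef_bound.
  - intros r Hr.
    replace (1/6 * (ln (1 + r + r^2) / 2) + Series (fun k => - (/ (2*PI) * sin_sixth_coef k) * r^(S k)))
      with (abel_log_mcos2 r (1/6)); [apply log_mcos2_abel_approx, Hr|].
    unfold abel_log_mcos2, int_log_mod. rewrite log_mod_sixth. unfold Rminus.
    rewrite <- Series_scal_l, <- Series_opp.
    f_equal. apply Series_ext. intros k. unfold int_log_mod_term, sin_sixth_coef. ring.
Qed.

Definition sixth_coef3 (k : nat) : R :=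
  / (12*PI) * sin_sixth_coef k + / (4*PI^2) * cos_sixth_coef k.

Lemma sixth_coef3_bound k :
  Rabs (sixth_coef3 k) <= (/ (12*PI) * 1 + / (4*PI^2) * 2) * / (INR k + 1)^2.
Proof.
  pose proof PI_RGT_0.
  assert (0 < / (12*PI)) by (apply Rinv_0_lt_compat; lra).
  assert (0 < / (4*PI^2)) by (apply Rinv_0_lt_compat; simpl; nra).
  pose proof (sin_sixth_coef_bound k). pose proof (cos_sixth_coef_bound k).
  unfold sixth_coef3. eapply Rle_trans; [apply Rabs_triang|].
  rewrite !Rabs_mult, (Rabs_pos_eq (/ (12*PI))), (Rabs_pos_eq (/ (4*PI^2))) by lra.
  assert (/ (12*PI) * Rabs (sin_sixth_coef k) <= / (12*PI) * (1 * / (INR k + 1)^2))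
    by (apply Rmult_le_compat_l; lra).
  assert (/ (4*PI^2) * Rabs (cos_sixth_coef k) <= / (4*PI^2) * (2 * / (INR k + 1)^2))
    by (apply Rmult_le_compat_l; lra).
  lra.
Qed.

Lemma Series_sixth_coef3 : Series sixth_coef3 =
  / (12*PI) * (sqrt 3 / 2 * Lfun chi3 2) + / (4*PI^2) * (- 11/36 * zeta3).
Proof.
  unfold sixth_coef3.
  rewrite Series_plus, !Series_scal_l, Series_sin_sixth_coef, Series_cos_sixth_coef; [reflexivity|..].
  - apply (ex_series_scal_l (/ (12*PI)) sin_sixth_coef), (ex_series_le_inv_succ_sq _ _ sin_sixth_coef_bound).
  - apply (ex_series_scal_l (/ (4*PI^2)) cos_sixth_coef), (ex_series_le_inv_succ_sq _ _ cos_sixth_coef_bound).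
Qed.

Lemma log_mcos3_sixth :
  log_mcos3 (1/6) = (1/6)^2 * (ln 3 / 2) -
    2 * (/ (12*PI) * (sqrt 3 / 2 * Lfun chi3 2) + / (4*PI^2) * (- 11/36 * zeta3)).
Proof.
  pose proof PI_RGT_0.
  rewrite <- Series_sixth_coef3, <- Series_scal_l.
  replace (ln 3) with (ln (1 + 1 + 1^2)) by (f_equal; ring).
  unfold Rminus. rewrite <- Series_opp.
  apply (eq_of_abel_approx _ (fun r => (1/6)^2 * (ln (1 + r + r^2) / 2)) _
           (2 * (/ (12*PI) * 1 + / (4*PI^2) * 2)) (PI / 3 * (1/6)^2)).
  - apply ex_derive_continuity_pt. auto_derive. lra.
  - intros k. rewrite Rabs_Ropp, Rabs_mult, Rabs_pos_eq, Rmult_assoc by lra.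
    apply Rmult_le_compat_l, sixth_coef3_bound. lra.
  - intros r Hr.
    replace ((1/6)^2 * (ln (1 + r + r^2) / 2) + Series (fun k => - (2 * sixth_coef3 k) * r^(S k)))
      with (abel_log_mcos3 r (1/6)); [apply log_mcos3_abel_approx, Hr|].
    unfold abel_log_mcos3, int_x_log_mod. rewrite log_mod_sixth. unfold Rminus.
    rewrite <- Series_scal_l, <- Series_opp.
    f_equal. apply Series_ext. intros k.
    unfold int_x_log_mod_term, sixth_coef3, sin_sixth_coef, cos_sixth_coef. field.
    split; [apply not_0_INR; lia | lra].
Qed.

Theorem corollary2p15 :
  mcos 2 (1/6) =
    Rpower 3 (1/12) *
    exp (sqrt 3 / (4 * PI) * (1/4 * Lfun chi3 2 - Lfun chi6 2)) /\
  mcos 3 (1/6) =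
    Rpower 3 (1/72) *
    exp (11 / (72 * PI ^ 2) * zeta3 +
         sqrt 3 / (12 * PI) * (1/4 * Lfun chi3 2 - Lfun chi6 2)) /\
  zeta3 =
    72 * PI ^ 2 / 11 *
    ln (Rpower 3 (1/72) * mcos 3 (1/6) / Rpower (mcos 2 (1/6)) (1/3)).
Proof.
  pose proof PI_RGT_0.
  rewrite (mcos2_eq (1/6)), (mcos3_eq (1/6)) by lra.
  rewrite log_mcos2_sixth, log_mcos3_sixth, Lfun_chi6_2.
  unfold Rpower. rewrite ln_exp.
  split; [|split].
  - rewrite <- exp_plus. f_equal. field. lra.
  - rewrite <- exp_plus. f_equal. field. lra.
  - unfold Rdiv at 2. rewrite <- exp_Ropp, <- !exp_plus, ln_exp. field. lra.
Qed.
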